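(* Let $m$ be a positive integer, $\omega$ a modulus of continuity, $f,g,h\in C^{m,\omega}(\mathbb{R})$, and $K\subseteq\mathbb{R}$ compact. If $\gamma=(f,g,h)$ satisfies the $A/V$ condition on $K$, then there is $\hat h\in C^{m,\omega}(\mathbb{R})$ with $\hat h|_K=h|_K$ and $\hat h'=2(f'g-fg')$ on $K$.
   Context: A modulus of continuity is a continuous, increasing, concave $\omega:[0,\infty)\to[0,\infty)$ with $\omega(0)=0$. $C^{m,\omega}(\mathbb{R})$: $m$-times continuously differentiable $\phi:\mathbb{R}\to\mathbb{R}$ with $\sup_{a\neq b}|\phi^{(m)}(b)-\phi^{(m)}(a)|/\omega(|b-a|)<\infty$. For $\gamma=(f,g,h)$ of class $C^m$ and $a\in\mathbb{R}$, $T_af(x)=\sum_{k=0}^m\frac{f^{(k)}(a)}{k!}(x-a)^k$ (similarly $T_ag$), and $A(\gamma;a,b)= h(b)-h(a)-2\int_a^b\big((T_af)'T_ag-(T_ag)'T_af\big) + 2f(a)(g(b)-T_ag(b)) - 2g(a)(f(b)-T_af(b))$, $V(\gamma;a,b)=(b-a)^{2m}+(b-a)^m\int_a^b(|(T_af)'|+|(T_ag)'|)$. $\gamma$ satisfies the $A/V$ condition on $E$ if for every $\varepsilon>0$ there is $\delta>0$ with $|A(\gamma;a,b)/V(\gamma;a,b)|<\varepsilon$ for all $a,b\in E$ with $0<b-a<\delta$. *)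

From Stdlib Require Import Reals Lra.
From Coquelicot Require Import Coquelicot.
Open Scope R_scope.

(* A modulus of continuity: omega : [0,oo) -> [0,oo), continuous, increasing,
   concave, omega 0 = 0.  Only its values on [0,oo) matter. *)
Definition modulus_of_continuity (w : R -> R) : Prop :=
  w 0 = 0 /\
  (forall t, 0 <= t -> 0 <= w t) /\
  (forall t, 0 <= t -> forall eps, 0 < eps -> exists delta, 0 < delta /\
       forall s, 0 <= s -> Rabs (s - t) < delta -> Rabs (w s - w t) < eps) /\
  (forall s t, 0 <= s -> s < t -> w s < w t) /\
  (forall x y l, 0 <= x -> 0 <= y -> 0 <= l <= 1 ->
       l * w x + (1 - l) * w y <= w (l * x + (1 - l) * y)).

Definition Cm (m : nat) (phi : R -> R) : Prop :=
  (forall k, (k < m)%nat -> forall x, ex_derive (Derive_n phi k) x) /\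
  (forall x, continuous (Derive_n phi m) x).

Definition Cmw (m : nat) (w : R -> R) (phi : R -> R) : Prop :=
  Cm m phi /\
  exists M, forall a b, a <> b ->
    Rabs (Derive_n phi m b - Derive_n phi m a) / w (Rabs (b - a)) <= M.

Definition Taylor (m : nat) (f : R -> R) (a : R) (x : R) : R :=
  sum_f_R0 (fun k => Derive_n f k a / INR (Factorial.fact k) * (x - a) ^ k) m.

Definition A_fun (m : nat) (f g h : R -> R) (a b : R) : R :=
  h b - h a
  - 2 * RInt (fun x => Derive (Taylor m f a) x * Taylor m g a x
                       - Derive (Taylor m g a) x * Taylor m f a x) a b
  + 2 * f a * (g b - Taylor m g a b)
  - 2 * g a * (f b - Taylor m f a b).

Definition V_fun (m : nat) (f g : R -> R) (a b : R) : R :=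
  (b - a) ^ (2 * m)
  + (b - a) ^ m * RInt (fun x => Rabs (Derive (Taylor m f a) x)
                                 + Rabs (Derive (Taylor m g a) x)) a b.

Definition AV_condition (m : nat) (f g h : R -> R) (E : R -> Prop) : Prop :=
  forall eps, 0 < eps -> exists delta, 0 < delta /\
    forall a b, E a -> E b -> 0 < b - a < delta ->
      Rabs (A_fun m f g h a b / V_fun m f g a b) < eps.

(* Let F = 2 (f' g - f g').  Expanding f and g in Taylor polynomials at a, the quantity
   h b - h a - int_a^b F differs from A(gamma; a, b) by O(w (b - a) (b - a)^m), while
   V(gamma; a, b) = O((b - a)^(m+1)).  Hence the A/V condition, even with eps = 1, makes
   u = h - int F flat on K:  |u b - u a| <= C w |b - a| |b - a|^m.
   A function flat on K extends to psi in C^{m,w} with psi = u and psi' = 0 on K: on each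
   gap (a, b) of K, interpolate from u a to u b by a rescaled C^{m,1} step whose derivatives
   vanish at both ends.  With a cutoff chi equal to 1 near K, the function
   h + chi (psi - u) is in C^{m,w}, equals h on K, and has derivative h' - u' = F there. *)

From Stdlib Require Import Reals Lra Lia Classical ClassicalEpsilon.
From Coquelicot Require Import Coquelicot.
Open Scope R_scope.

Lemma locally_Rabs (x : R) (P : R -> Prop) :
  (exists d, 0 < d /\ forall y, Rabs (y - x) < d -> P y) -> locally x P.
Proof.
  intros [d [Hd H]]. exists (mkposreal d Hd). intros y Hy. apply H. exact Hy.
Qed.

Lemma continuous_Rabs_iff (D : R -> R) x :
  continuous D x <->
  forall eps, 0 < eps -> exists d, 0 < d /\ forall y, Rabs (y - x) < d -> Rabs (D y - D x) < eps.
Proof.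
  split.
  - intros H eps Heps. apply filterlim_locally with (eps := mkposreal eps Heps) in H.
    destruct H as [d Hd]. exists d. split; [apply cond_pos|]. intros y Hy. apply (Hd y). exact Hy.
  - intros H. apply filterlim_locally. intros eps.
    destruct (H eps (cond_pos eps)) as [d [Hd H']].
    exists (mkposreal d Hd). intros y Hy. apply H'. exact Hy.
Qed.

Lemma is_derive_of_estimate (f : R -> R) x l :
  (forall eps, 0 < eps -> exists d, 0 < d /\ forall y, Rabs (y - x) < d ->
     Rabs (f y - f x - l * (y - x)) <= eps * Rabs (y - x)) ->
  is_derive f x l.
Proof.
  intros H. apply is_derive_Reals. intros eps Heps.
  destruct (H (eps / 2) ltac:(lra)) as [d [Hd H']].
  exists (mkposreal d Hd). intros h Hh0 Hh. simpl in Hh.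
  specialize (H' (x + h)). replace (x + h - x) with h in H' by ring.
  specialize (H' Hh).
  replace ((f (x + h) - f x) / h - l) with ((f (x + h) - f x - l * h) / h) by (field; auto).
  assert (Hp : 0 < Rabs h) by (apply Rabs_pos_lt; auto).
  unfold Rdiv. rewrite Rabs_mult, Rabs_inv.
  apply Rle_lt_trans with (eps / 2 * Rabs h * / Rabs h).
  - apply Rmult_le_compat_r; [left; apply Rinv_0_lt_compat|]; auto.
  - field_simplify; lra.
Qed.

Lemma is_derive_affine a b x : is_derive (fun x => a * x + b) x a.
Proof. auto_derive; auto; ring. Qed.

Lemma is_derive_comp_affine f a b x df : is_derive f (a * x + b) df ->
  is_derive (fun y => f (a * y + b)) x (a * df).
Proof.
  intros H. apply (is_derive_comp f (fun y => a * y + b)); [exact H | apply is_derive_affine].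
Qed.

Lemma Derive_n_S f n x : Derive_n f (S n) x = Derive_n (Derive f) n x.
Proof. rewrite (Derive_n_comp f n 1), Nat.add_1_r. reflexivity. Qed.

Lemma Derive_n_zero k y : Derive_n (fun _ => 0) k y = 0.
Proof. destruct k; [reflexivity | apply Derive_n_const]. Qed.

Lemma Rabs_sum4_le a b c d : Rabs (a + b - c - d) <= Rabs a + Rabs b + Rabs c + Rabs d.
Proof.
  unfold Rminus. pose proof (Rabs_triang (a + b + - c) (- d)). pose proof (Rabs_triang (a + b) (- c)).
  pose proof (Rabs_triang a b). rewrite Rabs_Ropp in *. lra.
Qed.

Lemma Rabs_le_of_ratio A V : 0 < V -> Rabs (A / V) < 1 -> Rabs A <= V.
Proof.
  intros HV H. unfold Rdiv in H. rewrite Rabs_mult, Rabs_inv, (Rabs_right V) in H by lra.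
  apply Rmult_lt_compat_r with (r := V) in H; [|lra].
  rewrite Rmult_assoc, Rinv_l, Rmult_1_r, Rmult_1_l in H by lra. lra.
Qed.

Lemma lipschitz_of_derive_bound D p q B : (forall x, ex_derive D x) ->
  (forall x, p <= x <= q -> Rabs (Derive D x) <= B) ->
  forall x y, p <= x <= q -> p <= y <= q -> Rabs (D x - D y) <= B * Rabs (x - y).
Proof.
  intros Hd HB x y Hx Hy.
  destruct (MVT_abs D (Derive D) y x) as [c [Hc1 Hc2]].
  { intros c _. apply is_derive_Reals, Derive_correct, Hd. }
  rewrite Hc1. apply Rmult_le_compat_r; [apply Rabs_pos|]. apply HB.
  split.
  - eapply Rle_trans; [|apply Hc2]. apply Rmin_glb; lra.
  - eapply Rle_trans; [apply Hc2|]. apply Rmax_lub; lra.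
Qed.

(** * Moduli of continuity *)

(* The identity is a weak modulus too, so C^{m,1} estimates (for the smooth step)
   are special cases of C^{m,w} ones. *)
Definition weak_modulus (w : R -> R) : Prop :=
  (forall t, 0 <= t -> 0 <= w t) /\
  (forall s t, 0 <= s <= t -> w s <= w t) /\
  (forall T, 0 < T -> exists C, 0 <= C /\ forall t, 0 <= t <= T -> t <= C * w t) /\
  (forall eps, 0 < eps -> exists d, 0 < d /\ forall t, 0 <= t < d -> w t < eps).

Lemma weak_modulus_id : weak_modulus (fun t => t).
Proof.
  repeat split; intros; try lra.
  - exists 1; split; intros; lra.
  - exists eps; split; intros; lra.
Qed.

Lemma modulus_pos w : modulus_of_continuity w -> forall t, 0 < t -> 0 < w t.
Proof. intros [w0 [_ [_ [wi _]]]] t Ht. rewrite <- w0. apply wi; lra. Qed.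

(* Concavity with w 0 = 0 makes w t / t nonincreasing. *)
Lemma modulus_ratio w : modulus_of_continuity w ->
  forall d L, 0 < d <= L -> d * w L <= L * w d.
Proof.
  intros [w0 [_ [_ [_ wc]]]] d L Hd.
  assert (Hl : 0 <= d / L <= 1).
  { split; [apply Rdiv_le_0_compat; lra|].
    apply Rmult_le_reg_r with L; [lra|]. unfold Rdiv. rewrite Rmult_assoc, Rinv_l; lra. }
  specialize (wc L 0 (d / L) ltac:(lra) ltac:(lra) Hl). rewrite w0 in wc.
  replace (d / L * L + (1 - d / L) * 0) with d in wc by (field; lra).
  apply Rmult_le_reg_r with (/ L); [apply Rinv_0_lt_compat; lra|].
  replace (L * w d * / L) with (w d) by (field; lra).
  replace (d * w L * / L) with (d / L * w L + (1 - d / L) * 0) by (field; lra). exact wc.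
Qed.

Lemma modulus_weak w : modulus_of_continuity w -> weak_modulus w.
Proof.
  intros Hw. pose proof Hw as [w0 [wp [wc [wi _]]]].
  split; [auto | split; [|split]].
  - intros s t [Hs Hst]. destruct (Req_dec s t); [subst; lra | left; apply wi; lra].
  - intros T HT. pose proof (modulus_pos w Hw T HT).
    exists (T / w T). split; [apply Rdiv_le_0_compat; lra|].
    intros t [Ht0 HtT]. destruct (Req_dec t 0) as [->|Ht]; [rewrite w0; lra|].
    pose proof (modulus_ratio w Hw t T ltac:(lra)).
    apply Rmult_le_reg_r with (w T); [auto|].
    replace (T / w T * w t * w T) with (T * w t) by (field; lra). lra.
  - intros eps Heps. destruct (wc 0 ltac:(lra) eps Heps) as [d [Hd H]].
    exists d. split; auto. intros t [Ht0 Htd]. specialize (H t Ht0).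
    rewrite w0, !Rminus_0_r, Rabs_right in H by lra.
    apply Rle_lt_trans with (Rabs (w t)); [apply Rle_abs | apply H; lra].
Qed.

Lemma pow_succ_le_modulus w T : weak_modulus w -> 0 < T -> exists Cw, 0 <= Cw /\
  forall m t, 0 <= t <= T -> t ^ (S m) <= Cw * w t * t ^ m.
Proof.
  intros [_ [_ [wlin _]]] HT. destruct (wlin T HT) as [Cw [HCw H]].
  exists Cw. split; auto. intros m t Ht. simpl. specialize (H t Ht).
  assert (0 <= t ^ m) by (apply pow_le; lra). nra.
Qed.

Lemma modulus_pow_mono w j s t : weak_modulus w -> 0 <= s <= t -> w s * s ^ j <= w t * t ^ j.
Proof.
  intros [wp [wm _]] H. apply Rmult_le_compat; [apply wp; lra | apply pow_le; lra | apply wm; lra |].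
  apply pow_incr; lra.
Qed.

Lemma modulus_pow_triangle w j A B a b c d1 d2 D : weak_modulus w ->
  0 <= A -> 0 <= B -> 0 <= d1 <= D -> 0 <= d2 <= D ->
  Rabs (a - b) <= A * w d1 * d1 ^ j -> Rabs (b - c) <= B * w d2 * d2 ^ j ->
  Rabs (a - c) <= (A + B) * w D * D ^ j.
Proof.
  intros Hw HA HB Hd1 Hd2 H1 H2.
  pose proof (modulus_pow_mono w j d1 D Hw Hd1). pose proof (modulus_pow_mono w j d2 D Hw Hd2).
  replace (a - c) with ((a - b) + (b - c)) by ring.
  eapply Rle_trans; [apply Rabs_triang|]. rewrite Rmult_assoc in *.
  assert (A * (w d1 * d1 ^ j) <= A * (w D * D ^ j)) by (apply Rmult_le_compat_l; auto).
  assert (B * (w d2 * d2 ^ j) <= B * (w D * D ^ j)) by (apply Rmult_le_compat_l; auto).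
  nra.
Qed.

Lemma is_derive_zero_of_flat w F x C j : weak_modulus w -> 0 <= C ->
  (forall y, Rabs (F y - F x) <= C * w (Rabs (y - x)) * Rabs (y - x) ^ (S j)) ->
  is_derive F x 0.
Proof.
  intros [wp [_ [_ wc]]] HC HF. apply is_derive_of_estimate. intros eps Heps.
  destruct (wc (eps / (C + 1))) as [d [Hd Hwd]]; [apply Rdiv_lt_0_compat; lra|].
  exists (Rmin d 1). split; [apply Rmin_pos; lra|]. intros y Hy.
  pose proof (Rmin_l d 1). pose proof (Rmin_r d 1). pose proof (Rabs_pos (y - x)).
  specialize (Hwd (Rabs (y - x)) ltac:(lra)). pose proof (wp (Rabs (y - x)) ltac:(lra)).
  rewrite Rmult_0_l, Rminus_0_r. eapply Rle_trans; [apply HF|]. simpl.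
  assert (Rabs (y - x) ^ j <= 1) by (rewrite <- (pow1 j); apply pow_incr; lra).
  assert (0 <= Rabs (y - x) ^ j) by (apply pow_le; lra).
  assert (C * w (Rabs (y - x)) <= eps).
  { apply Rle_trans with (C * (eps / (C + 1))); [apply Rmult_le_compat_l; lra|].
    apply Rmult_le_reg_r with (C + 1); [lra|]. field_simplify; nra. }
  assert (0 <= C * w (Rabs (y - x))) by (apply Rmult_le_pos; auto).
  replace (C * w (Rabs (y - x)) * (Rabs (y - x) * Rabs (y - x) ^ j))
    with (C * w (Rabs (y - x)) * Rabs (y - x) ^ j * Rabs (y - x)) by ring.
  apply Rmult_le_compat_r; [lra|]. nra.
Qed.

(** * Local Hölder spaces *)

Definition loc_holder (w : R -> R) (D : R -> R) : Prop :=
  forall p q, exists M, 0 <= M /\ forall x y, p <= x <= q -> p <= y <= q ->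
    Rabs (D x - D y) <= M * w (Rabs (x - y)).

Definition Cmw_loc (n : nat) (w : R -> R) (phi : R -> R) : Prop :=
  (forall k, (k < n)%nat -> forall x, ex_derive (Derive_n phi k) x) /\
  loc_holder w (Derive_n phi n).

Section LocHolder.
Variable w : R -> R.
Hypothesis Hw : weak_modulus w.

Lemma loc_holder_ext D1 D2 : (forall x, D1 x = D2 x) -> loc_holder w D1 -> loc_holder w D2.
Proof.
  intros E H p q. destruct (H p q) as [M [HM H']]. exists M; split; auto.
  intros x y Hx Hy. rewrite <- !E. auto.
Qed.

Lemma loc_holder_bounded D : loc_holder w D -> forall p q, exists B, 0 <= B /\
  forall x, p <= x <= q -> Rabs (D x) <= B.
Proof.
  destruct Hw as [wp [wm _]]. intros H p q. destruct (H p q) as [M [HM H']].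
  exists (Rabs (D p) + M * w (Rabs (q - p))). split.
  - apply Rplus_le_le_0_compat; [apply Rabs_pos|]. apply Rmult_le_pos; auto. apply wp, Rabs_pos.
  - intros x Hx. specialize (H' x p Hx ltac:(lra)).
    assert (w (Rabs (x - p)) <= w (Rabs (q - p))).
    { apply wm. split; [apply Rabs_pos|]. rewrite !Rabs_right by lra. lra. }
    assert (M * w (Rabs (x - p)) <= M * w (Rabs (q - p))) by (apply Rmult_le_compat_l; auto).
    pose proof (Rabs_triang_inv (D x) (D p)). lra.
Qed.

Lemma loc_holder_continuous D : loc_holder w D -> forall x, continuous D x.
Proof.
  destruct Hw as [wp [wm [_ wc]]]. intros H x.
  destruct (H (x - 1) (x + 1)) as [M [HM H']].
  apply continuous_Rabs_iff. intros eps Heps.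
  destruct (wc (eps / (M + 1))) as [d [Hd Hwd]]; [apply Rdiv_lt_0_compat; lra|].
  exists (Rmin d 1). split; [apply Rmin_pos; lra|].
  intros y Hy. pose proof (Rmin_l d 1). pose proof (Rmin_r d 1).
  assert (Hyb : x - 1 <= y <= x + 1).
  { assert (Hy1 : Rabs (y - x) < 1) by lra. apply Rabs_lt_between in Hy1. lra. }
  specialize (H' y x Hyb ltac:(lra)).
  assert (Hyd : Rabs (y - x) < d) by lra.
  specialize (Hwd (Rabs (y - x)) (conj (Rabs_pos _) Hyd)).
  apply Rle_lt_trans with (M * w (Rabs (y - x))); auto.
  apply Rle_lt_trans with (M * (eps / (M + 1))); [apply Rmult_le_compat_l; lra|].
  apply Rmult_lt_reg_r with (M + 1); [lra|]. field_simplify; nra.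
Qed.

Lemma loc_holder_of_lipschitz D :
  (forall p q, exists B, 0 <= B /\ forall x y, p <= x <= q -> p <= y <= q ->
     Rabs (D x - D y) <= B * Rabs (x - y)) ->
  loc_holder w D.
Proof.
  destruct Hw as [_ [_ [wlin _]]]. intros H p q. destruct (H p q) as [B [HB H']].
  destruct (wlin (Rmax (q - p) 1)) as [C [HC Hc]].
  { apply Rlt_le_trans with 1; [lra | apply Rmax_r]. }
  exists (B * C). split; [apply Rmult_le_pos; auto|].
  intros x y Hx Hy. eapply Rle_trans; [apply H'; auto|].
  rewrite Rmult_assoc. apply Rmult_le_compat_l; auto. apply Hc. split; [apply Rabs_pos|].
  apply Rle_trans with (q - p); [apply Rabs_le; lra | apply Rmax_l].
Qed.

Lemma Cmw_loc_ext n f g : (forall x, f x = g x) -> Cmw_loc n w f -> Cmw_loc n w g.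
Proof.
  intros E [H1 H2]. split.
  - intros k Hk x. apply ex_derive_ext with (Derive_n f k); auto.
    intros t. apply Derive_n_ext. auto.
  - apply loc_holder_ext with (Derive_n f n); auto. intros x; apply Derive_n_ext; auto.
Qed.

Lemma Cmw_loc_S n f : Cmw_loc (S n) w f <-> (forall x, ex_derive f x) /\ Cmw_loc n w (Derive f).
Proof.
  split.
  - intros [H1 H2]. split; [|split].
    + intros x. apply (H1 O); lia.
    + intros k Hk x. apply ex_derive_ext with (Derive_n f (S k)).
      { intros t; apply Derive_n_S. }
      apply H1; lia.
    + apply loc_holder_ext with (Derive_n f (S n)); auto. intros; apply Derive_n_S.
  - intros [H0 [H1 H2]]. split.
    + intros [|k] Hk x; [apply H0|].
      apply ex_derive_ext with (Derive_n (Derive f) k).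
      { intros t; symmetry; apply Derive_n_S. }
      apply H1; lia.
    + apply loc_holder_ext with (Derive_n (Derive f) n); auto.
      intros; symmetry; apply Derive_n_S.
Qed.

Lemma Cmw_loc_0 f : Cmw_loc 0 w f <-> loc_holder w f.
Proof. split; [intros [_ H]; exact H | intros H; split; [intros; lia | exact H]]. Qed.

Lemma Cmw_loc_ex_derive n f : Cmw_loc (S n) w f -> forall x, ex_derive f x.
Proof. intros H. apply Cmw_loc_S in H. exact (proj1 H). Qed.

Lemma Cmw_loc_ex_derive_n n f : Cmw_loc n w f -> forall k, (k <= n)%nat -> forall y, ex_derive_n f k y.
Proof. intros [H _] [|k] Hk y; [exact I | apply H; lia]. Qed.

Lemma Cmw_loc_weaken n f : Cmw_loc (S n) w f -> Cmw_loc n w f.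
Proof.
  intros [H1 H2]. split.
  - intros k Hk. apply H1. lia.
  - apply loc_holder_of_lipschitz. intros p q.
    destruct (loc_holder_bounded _ H2 p q) as [B [HB HB']].
    exists B. split; auto. apply lipschitz_of_derive_bound; auto.
Qed.

Lemma Cmw_loc_le n m f : (m <= n)%nat -> Cmw_loc n w f -> Cmw_loc m w f.
Proof. intros Hmn. induction Hmn; auto. intros H. apply IHHmn, Cmw_loc_weaken, H. Qed.

Lemma Cmw_loc_continuous n f : Cmw_loc n w f ->
  forall k, (k <= n)%nat -> forall x, continuous (Derive_n f k) x.
Proof.
  intros [H1 H2] k Hk x. destruct (Nat.eq_dec k n) as [->|].
  - apply loc_holder_continuous; auto.
  - apply (ex_derive_continuous (Derive_n f k)), H1. lia.
Qed.

Lemma Cmw_loc_derivs_bounded n f : Cmw_loc n w f -> forall p q, exists B, 0 <= B /\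
  forall k, (k <= n)%nat -> forall y, p <= y <= q -> Rabs (Derive_n f k y) <= B.
Proof.
  induction n; intros Hf p q.
  - destruct (loc_holder_bounded _ (proj2 Hf) p q) as [B [HB H]]. exists B. split; auto.
    intros k Hk y Hy. replace k with O by lia. auto.
  - destruct (IHn (Cmw_loc_weaken n f Hf) p q) as [B1 [HB1 H1]].
    destruct (loc_holder_bounded _ (proj2 Hf) p q) as [B2 [HB2 H2]].
    exists (B1 + B2). split; [lra|]. intros k Hk y Hy.
    destruct (Nat.eq_dec k (S n)) as [->|].
    + specialize (H2 y Hy). lra.
    + specialize (H1 k ltac:(lia) y Hy). lra.
Qed.

Lemma Cmw_loc_loc_holder n f : Cmw_loc n w f -> loc_holder w f.
Proof. intros H. apply (proj1 (Cmw_loc_0 f)), (Cmw_loc_le n); [lia | exact H]. Qed.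

Lemma ex_RInt_loc_holder f a b : loc_holder w f -> ex_RInt f a b.
Proof.
  intros Hf. apply (ex_RInt_continuous (V := R_CompleteNormedModule)).
  intros z _. apply loc_holder_continuous; auto.
Qed.

Lemma Cmw_loc_const n c : Cmw_loc n w (fun _ => c).
Proof.
  revert c. induction n; intros c.
  - apply Cmw_loc_0. intros p q. exists 0. split; [lra|].
    intros. rewrite Rminus_diag, Rabs_R0. lra.
  - apply Cmw_loc_S. split; [intros; apply ex_derive_const|].
    apply Cmw_loc_ext with (fun _ => 0); [intros; rewrite Derive_const; auto | apply IHn].
Qed.

Lemma Cmw_loc_plus n f g : Cmw_loc n w f -> Cmw_loc n w g -> Cmw_loc n w (fun x => f x + g x).
Proof.
  revert f g. induction n; intros f g Hf Hg.
  - apply Cmw_loc_0 in Hf, Hg. apply Cmw_loc_0. intros p q.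
    destruct (Hf p q) as [M1 [HM1 H1]]. destruct (Hg p q) as [M2 [HM2 H2]].
    exists (M1 + M2). split; [lra|]. intros x y Hx Hy.
    specialize (H1 x y Hx Hy). specialize (H2 x y Hx Hy).
    replace (f x + g x - (f y + g y)) with ((f x - f y) + (g x - g y)) by ring.
    eapply Rle_trans; [apply Rabs_triang | lra].
  - apply Cmw_loc_S in Hf as [Hf1 Hf2], Hg as [Hg1 Hg2]. apply Cmw_loc_S. split.
    + intros x. apply (ex_derive_plus f g); auto.
    + apply Cmw_loc_ext with (fun x => Derive f x + Derive g x); [|apply IHn; auto].
      intros x. rewrite Derive_plus; auto.
Qed.

Lemma Cmw_loc_scal n c f : Cmw_loc n w f -> Cmw_loc n w (fun x => c * f x).
Proof.
  revert f. induction n; intros f Hf.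
  - apply Cmw_loc_0 in Hf. apply Cmw_loc_0. intros p q. destruct (Hf p q) as [M [HM H]].
    exists (Rabs c * M). split; [apply Rmult_le_pos; auto; apply Rabs_pos|].
    intros x y Hx Hy. rewrite <- Rmult_minus_distr_l, Rabs_mult, Rmult_assoc.
    apply Rmult_le_compat_l; [apply Rabs_pos | auto].
  - apply Cmw_loc_S in Hf as [Hf1 Hf2]. apply Cmw_loc_S. split.
    + intros x. apply ex_derive_scal; auto.
    + apply Cmw_loc_ext with (fun x => c * Derive f x); [|apply IHn; auto].
      intros x. rewrite Derive_scal; auto.
Qed.

Lemma Cmw_loc_minus n f g : Cmw_loc n w f -> Cmw_loc n w g -> Cmw_loc n w (fun x => f x - g x).
Proof.
  intros Hf Hg. apply Cmw_loc_ext with (fun x => f x + (-1) * g x); [intros; ring|].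
  apply Cmw_loc_plus; auto. apply Cmw_loc_scal; auto.
Qed.

Lemma loc_holder_mult f g : loc_holder w f -> loc_holder w g -> loc_holder w (fun x => f x * g x).
Proof.
  intros Hf Hg p q.
  destruct (Hf p q) as [M1 [HM1 H1]]. destruct (Hg p q) as [M2 [HM2 H2]].
  destruct (loc_holder_bounded f Hf p q) as [B1 [HB1 HB1']].
  destruct (loc_holder_bounded g Hg p q) as [B2 [HB2 HB2']].
  exists (B1 * M2 + B2 * M1). split; [nra|]. intros x y Hx Hy.
  specialize (H1 x y Hx Hy). specialize (H2 x y Hx Hy).
  pose proof (HB1' x Hx). pose proof (HB2' y Hy).
  replace (f x * g x - f y * g y) with (f x * (g x - g y) + g y * (f x - f y)) by ring.
  eapply Rle_trans; [apply Rabs_triang|]. rewrite !Rabs_mult.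
  assert (Rabs (f x) * Rabs (g x - g y) <= B1 * (M2 * w (Rabs (x - y))))
    by (apply Rmult_le_compat; auto; apply Rabs_pos).
  assert (Rabs (g y) * Rabs (f x - f y) <= B2 * (M1 * w (Rabs (x - y))))
    by (apply Rmult_le_compat; auto; apply Rabs_pos).
  nra.
Qed.

Lemma loc_holder_abs f : loc_holder w f -> loc_holder w (fun x => Rabs (f x)).
Proof.
  intros Hf p q. destruct (Hf p q) as [M [HM H]]. exists M. split; auto.
  intros x y Hx Hy. eapply Rle_trans; [apply Rabs_triang_inv2 | auto].
Qed.

Lemma Cmw_loc_mult n f g : Cmw_loc n w f -> Cmw_loc n w g -> Cmw_loc n w (fun x => f x * g x).
Proof.
  revert f g. induction n; intros f g Hf Hg.
  - apply Cmw_loc_0 in Hf, Hg. apply Cmw_loc_0, loc_holder_mult; auto.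
  - pose proof (Cmw_loc_weaken _ _ Hf) as Hf0. pose proof (Cmw_loc_weaken _ _ Hg) as Hg0.
    apply Cmw_loc_S in Hf as [Hf1 Hf2], Hg as [Hg1 Hg2]. apply Cmw_loc_S. split.
    + intros x. apply ex_derive_mult; auto.
    + apply Cmw_loc_ext with (fun x => Derive f x * g x + f x * Derive g x).
      { intros x. rewrite Derive_mult; auto. }
      apply Cmw_loc_plus; auto.
Qed.

Lemma loc_holder_inv f c : 0 < c -> (forall x, c <= f x) -> loc_holder w f ->
  loc_holder w (fun x => / f x).
Proof.
  intros Hc Hfc Hf p q. destruct (Hf p q) as [M [HM H]].
  exists (M / (c * c)). split; [apply Rdiv_le_0_compat; nra|].
  intros x y Hx Hy. pose proof (Hfc x); pose proof (Hfc y).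
  replace (/ f x - / f y) with ((f y - f x) * / (f x * f y)) by (field; lra).
  rewrite Rabs_mult, Rabs_inv, (Rabs_right (f x * f y)), <- Rabs_Ropp, Ropp_minus_distr by nra.
  assert (/ (f x * f y) <= / (c * c)) by (apply Rinv_le_contravar; nra).
  assert (0 <= w (Rabs (x - y))) by (apply Hw, Rabs_pos).
  assert (0 < / (f x * f y)) by (apply Rinv_0_lt_compat; nra).
  specialize (H x y Hx Hy).
  apply Rle_trans with (M * w (Rabs (x - y)) * / (f x * f y)); [apply Rmult_le_compat_r; lra|].
  replace (M / (c * c) * w (Rabs (x - y))) with (M * w (Rabs (x - y)) * / (c * c)) by (unfold Rdiv; ring).
  apply Rmult_le_compat_l; nra.
Qed.

Lemma Cmw_loc_inv n f c : 0 < c -> (forall x, c <= f x) -> Cmw_loc n w f ->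
  Cmw_loc n w (fun x => / f x).
Proof.
  intros Hc Hfc. revert f Hfc. induction n; intros f Hfc Hf.
  - apply Cmw_loc_0 in Hf. apply Cmw_loc_0, loc_holder_inv with c; auto.
  - pose proof (Cmw_loc_weaken _ _ Hf) as Hf0.
    apply Cmw_loc_S in Hf as [Hf1 Hf2]. apply Cmw_loc_S.
    assert (Hf0' : forall x, f x <> 0) by (intros x; specialize (Hfc x); lra).
    split.
    + intros x. apply ex_derive_inv; auto.
    + apply Cmw_loc_ext with (fun x => (-1) * (Derive f x * (/ f x * / f x))).
      { intros x. rewrite Derive_inv; auto. field. auto. }
      apply Cmw_loc_scal, Cmw_loc_mult; auto. apply Cmw_loc_mult; auto.
Qed.

End LocHolder.

Lemma Cmw_loc_of_lipschitz w n f : weak_modulus w ->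
  Cmw_loc n (fun t => t) f -> Cmw_loc n w f.
Proof.
  intros Hw [H1 H2]. split; [exact H1 | exact (loc_holder_of_lipschitz w Hw _ H2)].
Qed.

Lemma Cmw_loc_affine n f a b : Cmw_loc n (fun t => t) f ->
  Cmw_loc n (fun t => t) (fun x => f (a * x + b)).
Proof.
  revert f. induction n; intros f Hf.
  - apply Cmw_loc_0 in Hf. apply Cmw_loc_0. intros p q.
    destruct (Hf (Rmin (a * p + b) (a * q + b)) (Rmax (a * p + b) (a * q + b))) as [M [HM H]].
    exists (M * Rabs a). split; [apply Rmult_le_pos; auto; apply Rabs_pos|].
    intros x y Hx Hy.
    assert (Hin : forall z, p <= z <= q ->
      Rmin (a * p + b) (a * q + b) <= a * z + b <= Rmax (a * p + b) (a * q + b)).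
    { intros z Hz. unfold Rmin, Rmax.
      destruct (Rle_dec (a * p + b) (a * q + b)); destruct (Rle_dec 0 a); split; nra. }
    eapply Rle_trans; [apply H; auto|].
    replace (a * x + b - (a * y + b)) with (a * (x - y)) by ring. rewrite Rabs_mult. lra.
  - apply Cmw_loc_S in Hf as [Hf1 Hf2]. apply Cmw_loc_S. split.
    + intros x. eexists. apply is_derive_comp_affine, Derive_correct; auto.
    + apply Cmw_loc_ext with (fun x => a * Derive f (a * x + b)).
      { intros x. symmetry. apply is_derive_unique, is_derive_comp_affine, Derive_correct; auto. }
      apply Cmw_loc_scal, IHn, Hf2.
Qed.

(** * Flat functions and a smooth step *)

Lemma continuous_zero_of_zeros_near D c : continuous D c ->
  (forall d, 0 < d -> exists y, Rabs (y - c) < d /\ D y = 0) -> D c = 0.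
Proof.
  intros H Z. destruct (Req_dec (D c) 0) as [E|E]; auto. exfalso.
  assert (Hpos : 0 < Rabs (D c) / 2) by (apply Rdiv_lt_0_compat; [apply Rabs_pos_lt; auto | lra]).
  destruct (proj1 (continuous_Rabs_iff D c) H _ Hpos) as [d [Hd Hd']].
  destruct (Z d Hd) as [y [Hy Dy]]. specialize (Hd' y Hy).
  rewrite Dy, Rminus_0_l, Rabs_Ropp in Hd'. lra.
Qed.

Lemma Derive_n_locally_zero f y : locally y (fun z => f z = 0) -> forall k, Derive_n f k y = 0.
Proof. intros H k. rewrite (Derive_n_ext_loc f (fun _ => 0)); [apply Derive_n_zero | exact H]. Qed.

Section Vanishing.
Variables (w : R -> R) (m : nat) (f : R -> R) (c : R).
Hypothesis Hw : weak_modulus w.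
Hypothesis Hf : Cmw_loc m w f.

Lemma Derive_n_vanish_left : (forall y, y < c -> f y = 0) ->
  forall k, (k <= m)%nat -> Derive_n f k c = 0.
Proof.
  intros H0 k Hk. apply continuous_zero_of_zeros_near; [apply (Cmw_loc_continuous w Hw m f Hf k Hk)|].
  intros d Hd. exists (c - d / 2). split; [rewrite Rabs_left; lra|].
  apply Derive_n_locally_zero, locally_Rabs. exists (d / 2). split; [lra|].
  intros z Hz. apply Rabs_lt_between in Hz. apply H0. lra.
Qed.

Lemma Derive_n_vanish_right : (forall y, c < y -> f y = 0) ->
  forall k, (k <= m)%nat -> Derive_n f k c = 0.
Proof.
  intros H0 k Hk. apply continuous_zero_of_zeros_near; [apply (Cmw_loc_continuous w Hw m f Hf k Hk)|].
  intros d Hd. exists (c + d / 2). split; [rewrite Rabs_right; lra|].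
  apply Derive_n_locally_zero, locally_Rabs. exists (d / 2). split; [lra|].
  intros z Hz. apply Rabs_lt_between in Hz. apply H0. lra.
Qed.

End Vanishing.

Lemma Derive_n_flat_bound m f c : Cmw_loc m (fun t => t) f ->
  (forall k, (k <= m)%nat -> Derive_n f k c = 0) ->
  exists C, 0 <= C /\ forall k, (k <= m)%nat -> forall s, Rabs (s - c) <= 1 ->
    Rabs (Derive_n f k s) <= C * Rabs (s - c) ^ (S m - k).
Proof.
  intros [H1 H2] H0. destruct (H2 (c - 1) (c + 1)) as [C [HC HC']].
  exists C. split; auto.
  assert (Hdown : forall j, (j <= m)%nat -> forall s, Rabs (s - c) <= 1 ->
    Rabs (Derive_n f (m - j) s) <= C * Rabs (s - c) ^ (S m - (m - j))).
  { induction j; intros Hj s Hs.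
    - replace (m - 0)%nat with m by lia. replace (S m - m)%nat with 1%nat by lia.
      rewrite pow_1. apply Rabs_le_between' in Hs.
      specialize (HC' s c ltac:(lra) ltac:(lra)). rewrite H0, Rminus_0_r in HC' by lia. exact HC'.
    - set (k := (m - S j)%nat). assert (Hk : (k < m)%nat) by lia.
      assert (Ek : (m - j)%nat = S k) by lia.
      assert (Hb : forall z, Rmin s c <= z <= Rmax s c ->
        Rabs (Derive (Derive_n f k) z) <= C * Rabs (s - c) ^ (S m - S k)).
      { intros z Hz. change (Derive (Derive_n f k) z) with (Derive_n f (S k) z). rewrite <- Ek.
        assert (Hzc : Rabs (z - c) <= Rabs (s - c)).
        { unfold Rmin, Rmax in Hz. apply Rabs_le_between' in Hs.
          destruct (Rle_dec s c); rewrite ?(Rabs_left1 (s - c)), ?(Rabs_right (s - c)) by lra;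
            apply Rabs_le_between'; split; lra. }
        eapply Rle_trans; [apply IHj; [lia | lra]|]. rewrite Ek.
        apply Rmult_le_compat_l; auto. apply pow_incr. split; auto. apply Rabs_pos. }
      pose proof (lipschitz_of_derive_bound (Derive_n f k) (Rmin s c) (Rmax s c) _ (H1 k Hk) Hb s c) as HM.
      rewrite (H0 k), Rminus_0_r in HM by lia.
      eapply Rle_trans; [apply HM; split; auto using Rmin_l, Rmax_l, Rmin_r, Rmax_r|].
      replace (S m - k)%nat with (S (S m - S k)) by lia. simpl. lra. }
  intros k Hk s Hs. replace k with (m - (m - k))%nat by lia. apply Hdown; [lia | auto].
Qed.

Definition ramp (j : nat) (t : R) : R := (Rmax t 0) ^ j.

Lemma ramp_nonpos j t : (0 < j)%nat -> t <= 0 -> ramp j t = 0.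
Proof. intros Hj Ht. unfold ramp. rewrite Rmax_right by lra. destruct j; [lia | simpl; ring]. Qed.

Lemma ramp_nonneg j t : 0 <= ramp j t.
Proof. apply pow_le, Rmax_r. Qed.

Lemma is_derive_ramp j t : (0 < j)%nat -> is_derive (ramp (S j)) t (INR (S j) * ramp j t).
Proof.
  intros Hj. destruct (Rlt_dec 0 t) as [Ht|Ht]; [|destruct (Rlt_dec t 0) as [Ht'|Ht']].
  - apply is_derive_ext_loc with (fun y => y ^ (S j)).
    { apply locally_Rabs. exists t. split; auto. intros y Hy. apply Rabs_lt_between in Hy.
      unfold ramp. rewrite Rmax_left by lra. auto. }
    unfold ramp. rewrite Rmax_left by lra. auto_derive; auto. simpl. ring.
  - apply is_derive_ext_loc with (fun _ => 0).
    { apply locally_Rabs. exists (- t). split; [lra|]. intros y Hy. apply Rabs_lt_between in Hy.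
      rewrite ramp_nonpos; auto. lra. }
    rewrite ramp_nonpos, Rmult_0_r by (auto || lra). auto_derive; auto.
  - replace t with 0 by lra. apply is_derive_of_estimate. intros eps Heps.
    exists (Rmin eps 1). split; [apply Rmin_pos; lra|]. intros y Hy.
    pose proof (Rmin_l eps 1). pose proof (Rmin_r eps 1).
    rewrite (ramp_nonpos (S j) 0), (ramp_nonpos j 0), Rminus_0_r in * by (auto || lra).
    rewrite Rmult_0_r, Rmult_0_l, !Rminus_0_r.
    unfold ramp. rewrite Rabs_right by (apply Rle_ge, pow_le, Rmax_r).
    assert (Hm : Rmax y 0 <= Rabs y) by (apply Rmax_lub; [apply Rle_abs | apply Rabs_pos]).
    assert (H0m : 0 <= Rmax y 0) by apply Rmax_r.
    assert (Hj1 : Rmax y 0 ^ j <= Rmax y 0).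
    { destruct j as [|j]; [lia|]. simpl.
      assert (Rmax y 0 ^ j <= 1) by (rewrite <- (pow1 j); apply pow_incr; lra).
      assert (0 <= Rmax y 0 ^ j) by (apply pow_le; lra). nra. }
    assert (0 <= Rmax y 0 ^ j) by (apply pow_le; lra).
    simpl. apply Rmult_le_compat; lra.
Qed.

Lemma Cmw_loc_ramp j : Cmw_loc j (fun t => t) (ramp (S j)).
Proof.
  induction j.
  - apply Cmw_loc_0. intros p q. exists 1. split; [lra|]. intros x y _ _. unfold ramp.
    rewrite !pow_1, Rmult_1_l. unfold Rmax.
    destruct (Rle_dec x 0), (Rle_dec y 0); apply Rabs_le_between'; split;
      pose proof (Rle_abs (x - y)); pose proof (Rabs_minus_sym x y); pose proof (Rle_abs (y - x)); lra.
  - apply Cmw_loc_S. split; [intros x; eexists; apply is_derive_ramp; lia|].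
    apply Cmw_loc_ext with (fun x => INR (S (S j)) * ramp (S j) x).
    { intros x. symmetry. apply is_derive_unique, is_derive_ramp. lia. }
    apply Cmw_loc_scal, IHj.
Qed.

Definition smooth_step (m : nat) (t : R) : R :=
  ramp (S m) t / (ramp (S m) t + ramp (S m) (1 - t)).

Lemma smooth_step_denominator m t : (/ 2) ^ (S m) <= ramp (S m) t + ramp (S m) (1 - t).
Proof.
  pose proof (ramp_nonneg (S m) t). pose proof (ramp_nonneg (S m) (1 - t)).
  destruct (Rle_dec (/ 2) t).
  - assert ((/ 2) ^ (S m) <= ramp (S m) t).
    { apply pow_incr. split; [lra|]. apply Rle_trans with t; [auto | apply Rmax_l]. }
    lra.
  - assert ((/ 2) ^ (S m) <= ramp (S m) (1 - t)).
    { apply pow_incr. split; [lra|]. apply Rle_trans with (1 - t); [lra | apply Rmax_l]. }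
    lra.
Qed.

Lemma Cmw_loc_smooth_step m : Cmw_loc m (fun t => t) (smooth_step m).
Proof.
  apply Cmw_loc_ext with
    (fun t => ramp (S m) t * / (ramp (S m) t + ramp (S m) ((-1) * t + 1))).
  { intros t. replace ((-1) * t + 1) with (1 - t) by ring. reflexivity. }
  apply Cmw_loc_mult; [apply weak_modulus_id | apply Cmw_loc_ramp|].
  apply Cmw_loc_inv with ((/ 2) ^ (S m)); [apply weak_modulus_id | apply pow_lt; lra | |].
  - intros x. replace ((-1) * x + 1) with (1 - x) by ring. apply smooth_step_denominator.
  - apply Cmw_loc_plus; [apply Cmw_loc_ramp | apply (Cmw_loc_affine m (ramp (S m))), Cmw_loc_ramp].
Qed.

Lemma smooth_step_0 m t : t <= 0 -> smooth_step m t = 0.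
Proof. intros Ht. unfold smooth_step. rewrite ramp_nonpos by (lia || lra). unfold Rdiv. ring. Qed.

Lemma smooth_step_1 m t : 1 <= t -> smooth_step m t = 1.
Proof.
  intros Ht. pose proof (smooth_step_denominator m t). pose proof (pow_lt (/ 2) (S m) ltac:(lra)).
  unfold smooth_step. rewrite (ramp_nonpos _ (1 - t)), Rplus_0_r in * by (lia || lra).
  field. lra.
Qed.

Lemma Derive_n_plus_const f c k x : Derive_n (fun t => f t + c) (S k) x = Derive_n f (S k) x.
Proof.
  rewrite !Derive_n_S. apply Derive_n_ext. intros t.
  unfold Derive. f_equal. apply Lim_ext. intros y. f_equal. ring.
Qed.

Lemma smooth_step_flat m : exists C, 0 <= C /\ forall k, (k <= m)%nat -> forall s, 0 <= s <= 1 ->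
  Rabs (Derive_n (smooth_step m) k s) <= C * s ^ (S m - k) /\
  ((0 < k)%nat -> Rabs (Derive_n (smooth_step m) k s) <= C * (1 - s) ^ (S m - k)) /\
  Rabs (smooth_step m s - 1) <= C * (1 - s) ^ (S m).
Proof.
  pose proof weak_modulus_id as Hid. pose proof (Cmw_loc_smooth_step m) as HS.
  destruct (Derive_n_flat_bound m (smooth_step m) 0 HS) as [C0 [HC0 H0]].
  { apply (Derive_n_vanish_left _ _ _ _ Hid HS). intros; apply smooth_step_0; lra. }
  assert (L1 : Cmw_loc m (fun t => t) (fun t => smooth_step m t + -1))
    by (apply Cmw_loc_plus; [exact HS | apply Cmw_loc_const]).
  destruct (Derive_n_flat_bound m (fun t => smooth_step m t + -1) 1 L1) as [C1 [HC1 H1]].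
  { apply (Derive_n_vanish_right _ _ _ _ Hid L1). intros; rewrite smooth_step_1; lra. }
  exists (Rmax C0 C1). split; [apply Rle_trans with C0; [auto | apply Rmax_l]|].
  pose proof (Rmax_l C0 C1). pose proof (Rmax_r C0 C1).
  intros k Hk s Hs. repeat split.
  - pose proof (H0 k Hk s) as H0'. rewrite Rminus_0_r, Rabs_right in H0' by lra.
    eapply Rle_trans; [apply H0'; lra|].
    apply Rmult_le_compat_r; [apply pow_le; lra | auto].
  - intros Hk0. destruct k as [|k]; [lia|]. rewrite <- (Derive_n_plus_const _ (-1)).
    pose proof (H1 (S k) Hk s) as H1'.
    rewrite Rabs_left1, Ropp_minus_distr in H1' by lra.
    eapply Rle_trans; [apply H1'; lra|].
    apply Rmult_le_compat_r; [apply pow_le; lra | auto].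
  - pose proof (H1 O ltac:(lia) s) as H1'. simpl in H1'.
    rewrite Rabs_left1, Ropp_minus_distr in H1' by lra.
    replace (smooth_step m s - 1) with (smooth_step m s + -1) by ring.
    eapply Rle_trans; [apply H1'; lra|].
    apply Rmult_le_compat_r; [apply pow_le; lra | auto].
Qed.

(** * Gaps of a compact set *)

Section Gaps.
Variable K : R -> Prop.
Variables lo hi : R.
Hypothesis HKc : closed_set K.
Hypothesis Hlo : K lo.
Hypothesis Hhi : K hi.
Hypothesis Hb : forall x, K x -> lo <= x <= hi.

Definition last_below (x : R) : R := real (Lub_Rbar (fun k => K k /\ k <= x)).
Definition first_above (x : R) : R := real (Glb_Rbar (fun k => K k /\ x <= k)).

Lemma last_below_spec x : lo <= x ->
  K (last_below x) /\ last_below x <= x /\ forall k, K k -> k <= x -> k <= last_below x.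
Proof.
  intros Hx. unfold last_below. destruct (Lub_Rbar_correct (fun k => K k /\ k <= x)) as [Hub Hl].
  assert (H1 : Rbar_le lo (Lub_Rbar (fun k => K k /\ k <= x))) by (apply Hub; auto).
  assert (H2 : Rbar_le (Lub_Rbar (fun k => K k /\ k <= x)) x).
  { apply Hl. intros y [_ Hy]. exact Hy. }
  destruct (Lub_Rbar (fun k => K k /\ k <= x)) as [r| |]; simpl in *; try contradiction.
  assert (Hub' : forall k, K k -> k <= x -> k <= r) by (intros k Hk Hkx; apply (Hub k); auto).
  split; [|split; auto].
  apply NNPP. intros HK. destruct (HKc r HK) as [d Hd]. pose proof (cond_pos d).
  assert (Hle : r <= r - d / 2).
  { apply (Hl (Finite (r - d / 2))). intros k [Hk Hkx]. simpl. apply Rnot_lt_le. intros Hlt.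
    apply (Hd k); auto. unfold disc. rewrite Rabs_left1 by (pose proof (Hub' k Hk Hkx); lra). lra. }
  lra.
Qed.

Lemma first_above_spec x : x <= hi ->
  K (first_above x) /\ x <= first_above x /\ forall k, K k -> x <= k -> first_above x <= k.
Proof.
  intros Hx. unfold first_above. destruct (Glb_Rbar_correct (fun k => K k /\ x <= k)) as [Hlb Hl].
  assert (H1 : Rbar_le (Glb_Rbar (fun k => K k /\ x <= k)) hi) by (apply Hlb; auto).
  assert (H2 : Rbar_le x (Glb_Rbar (fun k => K k /\ x <= k))).
  { apply Hl. intros y [_ Hy]. exact Hy. }
  destruct (Glb_Rbar (fun k => K k /\ x <= k)) as [r| |]; simpl in *; try contradiction.
  assert (Hlb' : forall k, K k -> x <= k -> r <= k) by (intros k Hk Hkx; apply (Hlb k); auto).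
  split; [|split; auto].
  apply NNPP. intros HK. destruct (HKc r HK) as [d Hd]. pose proof (cond_pos d).
  assert (Hle : r + d / 2 <= r).
  { apply (Hl (Finite (r + d / 2))). intros k [Hk Hkx]. simpl. apply Rnot_lt_le. intros Hlt.
    apply (Hd k); auto. unfold disc. rewrite Rabs_right by (pose proof (Hlb' k Hk Hkx); lra). lra. }
  lra.
Qed.

Definition in_gap (x : R) : Prop := ~ K x /\ lo < x < hi.

Lemma in_gap_ends x : in_gap x -> K (last_below x) /\ K (first_above x) /\
  last_below x < x < first_above x /\ forall z, last_below x < z < first_above x -> ~ K z.
Proof.
  intros [HK Hx]. destruct (last_below_spec x ltac:(lra)) as [L1 [L2 L3]].
  destruct (first_above_spec x ltac:(lra)) as [R1 [R2 R3]].
  assert (last_below x <> x) by (intros E; rewrite E in L1; auto).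
  assert (first_above x <> x) by (intros E; rewrite E in R1; auto).
  repeat split; auto; try lra.
  intros z Hz Kz. destruct (Rle_dec z x) as [Hzx|Hzx].
  - specialize (L3 z Kz Hzx). lra.
  - specialize (R3 z Kz ltac:(lra)). lra.
Qed.

Lemma in_gap_same x y : in_gap x -> last_below x < y < first_above x ->
  in_gap y /\ last_below y = last_below x /\ first_above y = first_above x.
Proof.
  intros Gx Hy. destruct (in_gap_ends x Gx) as [K1 [K2 [H3 H4]]].
  pose proof (Hb _ K1). pose proof (Hb _ K2).
  assert (Gy : in_gap y) by (split; [apply H4; auto | lra]).
  destruct (last_below_spec y ltac:(lra)) as [A1 [A2 A3]].
  destruct (first_above_spec y ltac:(lra)) as [B1 [B2 B3]].
  assert (last_below x <= last_below y) by (apply A3; auto; lra).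
  assert (first_above y <= first_above x) by (apply B3; auto; lra).
  split; [auto | split].
  - destruct (Rle_lt_or_eq_dec _ _ H1); auto. exfalso. apply (H4 (last_below y)); auto. lra.
  - destruct (Rle_lt_or_eq_dec _ _ H2); auto. exfalso. apply (H4 (first_above y)); auto. lra.
Qed.

Lemma in_gap_of_segment x y : x <= y -> lo <= x -> y <= hi -> (forall z, x <= z <= y -> ~ K z) ->
  in_gap x /\ in_gap y /\ last_below y = last_below x /\ first_above y = first_above x.
Proof.
  intros Hxy Hx Hy HnK.
  assert (Gx : in_gap x).
  { split; [apply HnK; lra|]. split.
    - destruct (Rle_lt_or_eq_dec _ _ Hx) as [E|E]; auto. exfalso; apply (HnK lo); auto; lra.
    - destruct (Rle_lt_or_eq_dec x hi) as [E|E]; try lra. exfalso; apply (HnK hi); auto; lra. }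
  destruct (in_gap_ends x Gx) as [K1 [K2 [H3 H4]]].
  assert (y < first_above x) by (apply Rnot_le_lt; intros Hr; apply (HnK (first_above x)); auto; lra).
  destruct (in_gap_same x y Gx ltac:(lra)) as [Gy [E1 E2]]. auto.
Qed.

Lemma not_in_gap_outside x : ~ in_gap x -> ~ K x -> x < lo \/ hi < x.
Proof.
  intros Gx Kx. destruct (Rlt_dec x lo); auto. destruct (Rlt_dec hi x); auto. exfalso.
  destruct (Req_dec x lo) as [->|]; auto. destruct (Req_dec x hi) as [->|]; auto.
  apply Gx. split; auto. lra.
Qed.

End Gaps.

(** * A flat extension off a compact set *)

Definition const_jet (k : nat) (v : R) : R := match k with O => v | S _ => 0 end.

Section FlatExtension.
Variable K : R -> Prop.
Variables lo hi : R.
Hypothesis HKc : closed_set K.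
Hypothesis Hlo : K lo.
Hypothesis Hhi : K hi.
Hypothesis Hb : forall x, K x -> lo <= x <= hi.
Variable w : R -> R.
Hypothesis Hw : weak_modulus w.
Hypothesis Hratio : forall d L, 0 < d <= L -> d * w L <= L * w d.
Variable m : nat.
Hypothesis Hm : (1 <= m)%nat.
Variables (u : R -> R) (Cu : R).
Hypothesis HCu : 0 <= Cu.
Hypothesis Hu : forall a b, K a -> K b ->
  Rabs (u b - u a) <= Cu * w (Rabs (b - a)) * Rabs (b - a) ^ m.

Definition clamp (x : R) : R := Rmax lo (Rmin x hi).

(* [gap_interp 0] equals u on K, is constant off [lo, hi], and on each gap (a, b) of K
   is the rescaled smooth step from u a to u b; [gap_interp k] is its k-th derivative. *)
Definition gap_interp (k : nat) (x : R) : R :=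
  if excluded_middle_informative (in_gap K lo hi x) then
    const_jet k (u (last_below K x))
    + (u (first_above K x) - u (last_below K x)) / (first_above K x - last_below K x) ^ k
      * Derive_n (smooth_step m) k ((x - last_below K x) / (first_above K x - last_below K x))
  else const_jet k (u (clamp x)).

Lemma gap_interp_in_gap k x : in_gap K lo hi x -> gap_interp k x =
  const_jet k (u (last_below K x))
  + (u (first_above K x) - u (last_below K x)) / (first_above K x - last_below K x) ^ k
    * Derive_n (smooth_step m) k ((x - last_below K x) / (first_above K x - last_below K x)).
Proof. intros H. unfold gap_interp. destruct (excluded_middle_informative _); tauto. Qed.

Lemma gap_interp_not_in_gap k x : ~ in_gap K lo hi x -> gap_interp k x = const_jet k (u (clamp x)).
Proof. intros H. unfold gap_interp. destruct (excluded_middle_informative _); tauto. Qed.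

Lemma gap_interp_K k x : K x -> gap_interp k x = const_jet k (u x).
Proof.
  intros Hx. rewrite gap_interp_not_in_gap by (intros [H _]; auto).
  unfold clamp. destruct (Hb x Hx). rewrite Rmin_left, Rmax_right by lra. auto.
Qed.

Lemma gap_interp_below k x : x <= lo -> gap_interp k x = gap_interp k lo.
Proof.
  intros Hx. rewrite (gap_interp_K k lo Hlo), gap_interp_not_in_gap by (intros [_ H]; lra).
  unfold clamp. destruct (Hb lo Hlo). rewrite Rmin_left, Rmax_left by lra. auto.
Qed.

Lemma gap_interp_above k x : hi <= x -> gap_interp k x = gap_interp k hi.
Proof.
  intros Hx. rewrite (gap_interp_K k hi Hhi), gap_interp_not_in_gap by (intros [_ H]; lra).
  unfold clamp. destruct (Hb hi Hhi). rewrite Rmin_right, Rmax_right by lra. auto.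
Qed.

Lemma gap_jump_bound x : in_gap K lo hi x ->
  Rabs (u (first_above K x) - u (last_below K x))
  <= Cu * w (first_above K x - last_below K x) * (first_above K x - last_below K x) ^ m.
Proof.
  intros Hx. destruct (in_gap_ends K lo hi HKc Hlo Hhi x Hx) as [K1 [K2 [H3 _]]].
  eapply Rle_trans; [apply Hu; auto|]. rewrite Rabs_right by lra. apply Rle_refl.
Qed.

Lemma gap_interp_K_bound k x z : (k <= m)%nat -> K x -> K z ->
  Rabs (gap_interp k z - gap_interp k x) <= Cu * w (Rabs (z - x)) * Rabs (z - x) ^ (m - k).
Proof.
  intros Hk Hx Hz. rewrite !gap_interp_K by auto. destruct k as [|k].
  - replace (m - 0)%nat with m by lia. apply Hu; auto.
  - simpl. rewrite Rminus_diag, Rabs_R0.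
    apply Rmult_le_pos; [apply Rmult_le_pos; auto; apply Hw, Rabs_pos | apply pow_le, Rabs_pos].
Qed.

(* The factor L^-k of a k-th derivative on a gap of length L is absorbed by the flatness
   (d/L)^(j+1) of the step at distance d from an end; Hratio then trades w L / L for w d / d. *)
Lemma rescaled_step_bound Cs k j L d J X :
  0 <= Cs -> 0 < d <= L ->
  Rabs J <= Cu * w L * L ^ (k + j) -> Rabs X <= Cs * (d / L) ^ (S j) ->
  Rabs (J / L ^ k * X) <= Cu * Cs * w d * d ^ j.
Proof.
  intros HCs Hd HJ HX.
  assert (HLk : 0 < L ^ k) by (apply pow_lt; lra).
  assert (HLj : 0 < L ^ j) by (apply pow_lt; lra).
  assert (wLp : 0 <= w L) by (apply Hw; lra).
  assert (wdp : 0 <= w d) by (apply Hw; lra).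
  unfold Rdiv at 1. rewrite !Rabs_mult, Rabs_inv, (Rabs_right (L ^ k)) by lra.
  apply Rle_trans with (Cu * w L * L ^ (k + j) * / L ^ k * (Cs * (d / L) ^ S j)).
  { apply Rmult_le_compat; [| apply Rabs_pos | | auto].
    - apply Rmult_le_pos; [apply Rabs_pos | left; apply Rinv_0_lt_compat; auto].
    - apply Rmult_le_compat_r; [left; apply Rinv_0_lt_compat|]; auto. }
  rewrite pow_add. unfold Rdiv. rewrite <- tech_pow_Rmult, Rpow_mult_distr, pow_inv.
  replace (Cu * w L * (L ^ k * L ^ j) * / L ^ k * (Cs * (d * / L * (d ^ j * / L ^ j))))
    with (Cu * Cs * (d * w L / L) * d ^ j) by (field; lra).
  assert (d * w L / L <= w d).
  { apply Rmult_le_reg_r with L; [lra|]. unfold Rdiv.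
    rewrite Rmult_assoc, Rinv_l, Rmult_1_r by lra. pose proof (Hratio d L Hd); lra. }
  assert (0 <= d ^ j) by (apply pow_le; lra).
  assert (0 <= Cu * Cs) by (apply Rmult_le_pos; auto).
  apply Rmult_le_compat_r; auto. apply Rmult_le_compat_l; auto.
Qed.

Lemma gap_interp_gap_bound : exists Cs, 0 <= Cs /\ forall k y, (k <= m)%nat -> in_gap K lo hi y ->
  Rabs (gap_interp k y - const_jet k (u (last_below K y)))
    <= Cu * Cs * w (y - last_below K y) * (y - last_below K y) ^ (m - k) /\
  Rabs (gap_interp k y - const_jet k (u (first_above K y)))
    <= Cu * Cs * w (first_above K y - y) * (first_above K y - y) ^ (m - k).
Proof.
  destruct (smooth_step_flat m) as [Cs [HCs HS]]. exists Cs. split; auto.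
  intros k y Hk Hy. destruct (in_gap_ends K lo hi HKc Hlo Hhi y Hy) as [_ [_ [H3 _]]].
  pose proof (gap_jump_bound y Hy) as HJ. rewrite gap_interp_in_gap by auto.
  set (a := last_below K y) in *. set (b := first_above K y) in *. set (L := b - a) in *.
  assert (HL : 0 < L) by (unfold L; lra).
  set (s := (y - a) / L).
  assert (Hs : 0 <= s <= 1).
  { unfold s. split; [apply Rdiv_le_0_compat; lra|]. apply Rmult_le_reg_r with L; auto.
    unfold Rdiv. rewrite Rmult_assoc, Rinv_l, Rmult_1_r, Rmult_1_l by lra. unfold L; lra. }
  assert (Hs1 : (b - y) / L = 1 - s) by (unfold s, L; field; lra).
  replace m with (k + (m - k))%nat in HJ by lia.
  destruct (HS k Hk s Hs) as [S0 [S1 S2]].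
  replace (S m - k)%nat with (S (m - k)) in S0, S1 by lia.
  split.
  - replace (const_jet k (u a) + (u b - u a) / L ^ k * Derive_n (smooth_step m) k s - const_jet k (u a))
      with ((u b - u a) / L ^ k * Derive_n (smooth_step m) k s) by ring.
    apply rescaled_step_bound; auto. unfold L; lra.
  - destruct k as [|k]; simpl const_jet.
    + replace (u a + (u b - u a) / L ^ 0 * Derive_n (smooth_step m) 0 s - u b)
        with ((u b - u a) / L ^ 0 * (smooth_step m s - 1)) by (simpl; field).
      apply rescaled_step_bound; auto; [unfold L; lra|]. rewrite Hs1, Nat.sub_0_r. exact S2.
    + replace (0 + (u b - u a) / L ^ S k * Derive_n (smooth_step m) (S k) s - 0)
        with ((u b - u a) / L ^ S k * Derive_n (smooth_step m) (S k) s) by ring.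
      apply rescaled_step_bound; auto; [unfold L; lra|]. rewrite Hs1. apply S1. lia.
Qed.

Lemma gap_interp_bound : exists C, 0 <= C /\ forall k x y, (k <= m)%nat -> K x ->
  Rabs (gap_interp k y - gap_interp k x) <= C * w (Rabs (y - x)) * Rabs (y - x) ^ (m - k).
Proof.
  destruct gap_interp_gap_bound as [Cs [HCs HE]]. exists (Cu * Cs + Cu). split; [nra|].
  intros k x y Hk Hx. assert (HCs' : 0 <= Cu * Cs) by nra.
  pose proof (Rabs_pos (y - x)) as Hd.
  destruct (classic (in_gap K lo hi y)) as [Gy|Gy].
  - destruct (in_gap_ends K lo hi HKc Hlo Hhi y Gy) as [K1 [K2 [H3 H4]]].
    destruct (HE k y Hk Gy) as [EL ER].
    destruct (Rle_dec x (last_below K y)) as [Hxa|Hxa].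
    + pose proof (gap_interp_K_bound k x _ Hk Hx K1) as EK.
      rewrite (gap_interp_K k (last_below K y)), (Rabs_right (last_below K y - x)) in EK by (auto || lra).
      rewrite (Rabs_right (y - x)) in * by lra.
      apply (modulus_pow_triangle w _ _ _ _ (const_jet k (u (last_below K y))) _
        (y - last_below K y) (last_below K y - x) _ Hw HCs' HCu);
        [lra | lra | exact EL | exact EK].
    + assert (Hxb : first_above K y <= x)
        by (apply Rnot_lt_le; intros Hxb; apply (H4 x); auto; lra).
      pose proof (gap_interp_K_bound k x _ Hk Hx K2) as EK.
      rewrite (gap_interp_K k (first_above K y)), (Rabs_left1 (first_above K y - x)), Ropp_minus_distr
        in EK by (auto || lra).
      rewrite (Rabs_left1 (y - x)), Ropp_minus_distr in * by lra.
      apply (modulus_pow_triangle w _ _ _ _ (const_jet k (u (first_above K y))) _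
        (first_above K y - y) (x - first_above K y) _ Hw HCs' HCu);
        [lra | lra | exact ER | exact EK].
  - destruct (classic (K y)) as [Ky|Ky].
    + eapply Rle_trans; [apply gap_interp_K_bound; auto|]. rewrite !Rmult_assoc.
      apply Rmult_le_compat_r; [apply Rmult_le_pos; [apply Hw | apply pow_le]; apply Rabs_pos | lra].
    + assert (Hz : exists z, K z /\ gap_interp k y = gap_interp k z /\ Rabs (z - x) <= Rabs (y - x)).
      { destruct (Hb x Hx). destruct (not_in_gap_outside K lo hi Hlo Hhi y Gy Ky) as [Hy|Hy].
        - exists lo. rewrite gap_interp_below, (Rabs_left1 (lo - x)), (Rabs_left1 (y - x)) by lra.
          repeat split; auto; lra.
        - exists hi. rewrite gap_interp_above, (Rabs_right (hi - x)), (Rabs_right (y - x)) by lra.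
          repeat split; auto; lra. }
      destruct Hz as [z [Kz [-> Hzx]]].
      eapply Rle_trans; [apply gap_interp_K_bound; auto|]. rewrite !Rmult_assoc.
      apply Rmult_le_compat; [lra | apply Rmult_le_pos; [apply Hw | apply pow_le]; apply Rabs_pos | lra |].
      apply modulus_pow_mono; auto. split; [apply Rabs_pos | auto].
Qed.

Lemma is_derive_gap_interp_in_gap k x : (k < m)%nat -> in_gap K lo hi x ->
  is_derive (gap_interp k) x (gap_interp (S k) x).
Proof.
  intros Hk Gx. destruct (in_gap_ends K lo hi HKc Hlo Hhi x Gx) as [_ [_ [H3 _]]].
  rewrite (gap_interp_in_gap (S k) x Gx).
  set (a := last_below K x) in *. set (b := first_above K x) in *. set (L := b - a).
  assert (HL : 0 < L) by (unfold L; lra).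
  apply is_derive_ext_loc with
    (fun y => const_jet k (u a) + (u b - u a) / L ^ k * Derive_n (smooth_step m) k (/ L * y + - a / L)).
  { apply locally_Rabs. exists (Rmin (x - a) (b - x)). split; [apply Rmin_pos; lra|].
    intros y Hy. pose proof (Rmin_l (x - a) (b - x)). pose proof (Rmin_r (x - a) (b - x)).
    apply Rabs_lt_between in Hy.
    destruct (in_gap_same K lo hi HKc Hlo Hhi Hb x y Gx ltac:(unfold a, b in *; lra)) as [Gy [E1 E2]].
    rewrite gap_interp_in_gap, E1, E2 by auto. fold a b L.
    replace (/ L * y + - a / L) with ((y - a) / L) by (field; lra). reflexivity. }
  assert (Hd : ex_derive (Derive_n (smooth_step m) k) (/ L * x + - a / L))
    by (apply (proj1 (Cmw_loc_smooth_step m)); auto).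
  apply Derive_correct, is_derive_comp_affine in Hd.
  apply (is_derive_scal _ _ ((u b - u a) / L ^ k)) in Hd.
  apply (is_derive_plus (fun _ => const_jet k (u a))) with (df := 0) in Hd; [|auto_derive; auto].
  replace (/ L * x + - a / L) with ((x - a) / L) in Hd by (field; lra).
  replace (const_jet (S k) (u a) + (u b - u a) / L ^ S k * Derive_n (smooth_step m) (S k) ((x - a) / L))
    with (plus 0 ((u b - u a) / L ^ k * (/ L * Derive (Derive_n (smooth_step m) k) ((x - a) / L)))).
  - exact Hd.
  - simpl. unfold plus; simpl. field. split; [apply pow_nonzero|]; lra.
Qed.

Lemma is_derive_gap_interp k x : (k < m)%nat -> is_derive (gap_interp k) x (gap_interp (S k) x).
Proof.
  intros Hk. destruct (classic (in_gap K lo hi x)) as [Gx|Gx]; [apply is_derive_gap_interp_in_gap; auto|].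
  destruct (classic (K x)) as [Kx|Kx].
  - rewrite (gap_interp_K (S k) x Kx). destruct gap_interp_bound as [C [HC HE]].
    apply (is_derive_zero_of_flat w _ _ C (m - S k) Hw HC). intros y.
    replace (S (m - S k)) with (m - k)%nat by lia. apply HE; auto. lia.
  - destruct (not_in_gap_outside K lo hi Hlo Hhi x Gx Kx) as [Hx|Hx].
    + rewrite (gap_interp_below (S k) x), (gap_interp_K (S k) lo Hlo) by lra.
      apply is_derive_ext_loc with (fun _ => gap_interp k lo); [|auto_derive; auto].
      apply locally_Rabs. exists (lo - x). split; [lra|]. intros y Hy. apply Rabs_lt_between in Hy.
      symmetry. apply gap_interp_below. lra.
    + rewrite (gap_interp_above (S k) x), (gap_interp_K (S k) hi Hhi) by lra.
      apply is_derive_ext_loc with (fun _ => gap_interp k hi); [|auto_derive; auto].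
      apply locally_Rabs. exists (x - hi). split; [lra|]. intros y Hy. apply Rabs_lt_between in Hy.
      symmetry. apply gap_interp_above. lra.
Qed.

Lemma const_jet_m v : const_jet m v = 0.
Proof. destruct m; [lia | reflexivity]. Qed.

Lemma gap_interp_holder_in_gap Ls x y : 0 <= Ls ->
  (forall s t, 0 <= s <= 1 -> 0 <= t <= 1 ->
     Rabs (Derive_n (smooth_step m) m s - Derive_n (smooth_step m) m t) <= Ls * Rabs (s - t)) ->
  x < y -> in_gap K lo hi x -> first_above K x = first_above K y -> last_below K x = last_below K y ->
  in_gap K lo hi y -> Rabs (gap_interp m x - gap_interp m y) <= Cu * Ls * w (y - x).
Proof.
  intros HLs HS Hxy Gx E2 E1 Gy.
  destruct (in_gap_ends K lo hi HKc Hlo Hhi x Gx) as [_ [_ [H3 _]]].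
  destruct (in_gap_ends K lo hi HKc Hlo Hhi y Gy) as [_ [_ [H5 _]]].
  pose proof (gap_jump_bound x Gx) as HJ.
  rewrite !gap_interp_in_gap, !const_jet_m, <- E1, <- E2 by auto.
  set (a := last_below K x) in *. set (b := first_above K x) in *. set (L := b - a) in *.
  assert (HL : 0 < L) by (unfold L; lra).
  assert (HLm : 0 < L ^ m) by (apply pow_lt; lra).
  assert (Hs : forall t, a <= t <= b -> 0 <= (t - a) / L <= 1).
  { intros t Ht. split; [apply Rdiv_le_0_compat; lra|]. apply Rmult_le_reg_r with L; auto.
    unfold Rdiv. rewrite Rmult_assoc, Rinv_l, Rmult_1_r, Rmult_1_l by lra. unfold L; lra. }
  pose proof (HS ((x - a) / L) ((y - a) / L) (Hs x ltac:(lra)) (Hs y ltac:(lra))) as HSxy.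
  replace ((x - a) / L - (y - a) / L) with (- ((y - x) / L)) in HSxy by (field; lra).
  rewrite Rabs_Ropp, (Rabs_right ((y - x) / L)) in HSxy by (apply Rle_ge, Rdiv_le_0_compat; lra).
  replace (0 + (u b - u a) / L ^ m * Derive_n (smooth_step m) m ((x - a) / L)
           - (0 + (u b - u a) / L ^ m * Derive_n (smooth_step m) m ((y - a) / L)))
    with ((u b - u a) / L ^ m
          * (Derive_n (smooth_step m) m ((x - a) / L) - Derive_n (smooth_step m) m ((y - a) / L)))
    by ring.
  unfold Rdiv at 1. rewrite !Rabs_mult, Rabs_inv, (Rabs_right (L ^ m)) by lra.
  apply Rle_trans with (Cu * w L * L ^ m * / L ^ m * (Ls * ((y - x) / L))).
  { apply Rmult_le_compat; [| apply Rabs_pos | | exact HSxy].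
    - apply Rmult_le_pos; [apply Rabs_pos | left; apply Rinv_0_lt_compat; auto].
    - apply Rmult_le_compat_r; [left; apply Rinv_0_lt_compat; auto | exact HJ]. }
  replace (Cu * w L * L ^ m * / L ^ m * (Ls * ((y - x) / L)))
    with (Cu * Ls * ((y - x) * w L / L)) by (field; lra).
  apply Rmult_le_compat_l; [nra|].
  apply Rmult_le_reg_r with L; auto. unfold Rdiv. rewrite Rmult_assoc, Rinv_l, Rmult_1_r by lra.
  pose proof (Hratio (y - x) L ltac:(unfold L; lra)). lra.
Qed.

Lemma gap_interp_holder : exists C, 0 <= C /\
  forall x y, Rabs (gap_interp m x - gap_interp m y) <= C * w (Rabs (x - y)).
Proof.
  destruct gap_interp_bound as [C2 [HC2 HE]].
  destruct (proj2 (Cmw_loc_smooth_step m) 0 1) as [Ls [HLs HS]].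
  destruct Hw as [wp [wm _]].
  exists (2 * C2 + Cu * Ls). split; [nra|].
  assert (Main : forall x y, x <= y -> Rabs (gap_interp m x - gap_interp m y) <= (2 * C2 + Cu * Ls) * w (y - x)).
  { intros x y Hxy.
    assert (wy : 0 <= w (y - x)) by (apply wp; lra).
    assert (0 <= Cu * Ls * w (y - x)) by (apply Rmult_le_pos; nra).
    destruct (Req_dec x y) as [<-|Nxy]; [rewrite Rminus_diag, Rabs_R0; nra|].
    destruct (classic (exists z, x <= z <= y /\ K z)) as [[z [Hz Kz]]|NZ].
    - pose proof (HE m z x (le_n m) Kz) as E1. pose proof (HE m z y (le_n m) Kz) as E2.
      rewrite Nat.sub_diag, pow_O, Rmult_1_r in E1, E2.
      rewrite (Rabs_left1 (x - z)), Ropp_minus_distr in E1 by lra.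
      rewrite (Rabs_right (y - z)) in E2 by lra.
      assert (w (z - x) <= w (y - x)) by (apply wm; lra).
      assert (w (y - z) <= w (y - x)) by (apply wm; lra).
      replace (gap_interp m x - gap_interp m y)
        with ((gap_interp m x - gap_interp m z) - (gap_interp m y - gap_interp m z)) by ring.
      eapply Rle_trans; [apply Rabs_triang|]. rewrite Rabs_Ropp.
      assert (C2 * w (z - x) <= C2 * w (y - x)) by (apply Rmult_le_compat_l; auto).
      assert (C2 * w (y - z) <= C2 * w (y - x)) by (apply Rmult_le_compat_l; auto).
      nra.
    - assert (NK : forall z, x <= z <= y -> ~ K z) by (intros z Hz Kz; apply NZ; eauto).
      destruct (Rlt_dec y lo) as [Hy|Hy].
      { rewrite (gap_interp_below m x), (gap_interp_below m y), Rminus_diag, Rabs_R0 by lra. nra. }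
      destruct (Rlt_dec hi x) as [Hx|Hx].
      { rewrite (gap_interp_above m x), (gap_interp_above m y), Rminus_diag, Rabs_R0 by lra. nra. }
      assert (lo <= x) by (apply Rnot_lt_le; intros Hc; apply (NK lo); auto; lra).
      assert (y <= hi) by (apply Rnot_lt_le; intros Hc; apply (NK hi); auto; lra).
      destruct (in_gap_of_segment K lo hi HKc Hlo Hhi Hb x y Hxy H0 H1 NK) as [Gx [Gy [E1 E2]]].
      eapply Rle_trans; [apply (gap_interp_holder_in_gap Ls); auto; lra|].
      apply Rle_trans with (Cu * Ls * w (y - x) + 0); [lra|]. nra. }
  intros x y. destruct (Rle_dec x y).
  - rewrite (Rabs_left1 (x - y)), Ropp_minus_distr by lra. apply Main; auto.
  - rewrite Rabs_minus_sym, (Rabs_right (x - y)) by lra. apply Main. lra.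
Qed.

Lemma flat_extension : exists psi, Cmw_loc m w psi /\ (forall x, K x -> psi x = u x) /\
  (forall x, K x -> Derive psi x = 0).
Proof.
  exists (gap_interp 0).
  assert (HD : forall k, (k <= m)%nat -> forall x, Derive_n (gap_interp 0) k x = gap_interp k x).
  { induction k; intros Hk x; [reflexivity|].
    simpl. rewrite (Derive_ext _ (gap_interp k)) by (intros; apply IHk; lia).
    apply is_derive_unique, is_derive_gap_interp. lia. }
  split; [split | split].
  - intros k Hk x. apply ex_derive_ext with (gap_interp k); [intros; symmetry; apply HD; lia|].
    eexists. apply is_derive_gap_interp. auto.
  - destruct gap_interp_holder as [C [HC HH]]. intros p q. exists C. split; auto.
    intros x y _ _. rewrite !HD by lia. auto.
  - intros x Kx. rewrite gap_interp_K; auto.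
  - intros x Kx. change (Derive (gap_interp 0) x) with (Derive_n (gap_interp 0) 1 x).
    rewrite HD, gap_interp_K by (auto || lia). reflexivity.
Qed.

End FlatExtension.

(** * Taylor polynomials *)

Lemma INR_fact_pos n : 0 < INR (Factorial.fact n).
Proof. apply lt_0_INR, Factorial.lt_O_fact. Qed.

Lemma INR_fact_ge_1 n : 1 <= INR (Factorial.fact n).
Proof. apply (le_INR 1), Factorial.lt_O_fact. Qed.

Lemma Taylor_S n f a x : Taylor (S n) f a x =
  Taylor n f a x + Derive_n f (S n) a / INR (Factorial.fact (S n)) * (x - a) ^ (S n).
Proof. reflexivity. Qed.

Lemma Taylor_at n f a : Taylor n f a a = f a.
Proof.
  induction n; [unfold Taylor; simpl; field|].
  rewrite Taylor_S, IHn, Rminus_diag. simpl. ring.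
Qed.

Lemma is_derive_Taylor_term n f a x :
  is_derive (fun x => Derive_n f (S n) a / INR (Factorial.fact (S n)) * (x - a) ^ (S n)) x
    (Derive_n (Derive f) n a / INR (Factorial.fact n) * (x - a) ^ n).
Proof.
  rewrite <- Derive_n_S. pose proof (INR_fact_pos n). pose proof (pos_INR n).
  assert (Hp : is_derive (fun x => x - a) x 1) by (auto_derive; auto).
  apply (is_derive_pow _ (S n)), (is_derive_scal _ _ (Derive_n f (S n) a / INR (Factorial.fact (S n)))) in Hp.
  replace (Derive_n f (S n) a / INR (Factorial.fact n) * (x - a) ^ n) with
    (Derive_n f (S n) a / INR (Factorial.fact (S n)) * (INR (S n) * 1 * (x - a) ^ Nat.pred (S n))).
  - exact Hp.
  - rewrite fact_simpl, mult_INR, S_INR. simpl Nat.pred. field. lra.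
Qed.

Lemma is_derive_Taylor n f a x : is_derive (Taylor (S n) f a) x (Taylor n (Derive f) a x).
Proof.
  revert x. induction n; intros x.
  - pose proof (is_derive_Taylor_term 0 f a x) as H.
    apply (is_derive_plus (fun _ => f a / 1 * 1)) with (df := 0) in H; [|auto_derive; auto].
    unfold plus in H; simpl in H. rewrite Rplus_0_l in H. exact H.
  - exact (is_derive_plus _ _ _ _ _ (IHn x) (is_derive_Taylor_term (S n) f a x)).
Qed.

Lemma Derive_Taylor n f a x : Derive (Taylor (S n) f a) x = Taylor n (Derive f) a x.
Proof. apply is_derive_unique, is_derive_Taylor. Qed.

Lemma Cmw_loc_Taylor w n f a : Cmw_loc n w (Taylor n f a).
Proof.
  revert f. induction n; intros f.
  - apply Cmw_loc_ext with (fun _ => f a); [intros; unfold Taylor; simpl; field | apply Cmw_loc_const].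
  - apply Cmw_loc_S. split; [intros x; eexists; apply is_derive_Taylor|].
    apply Cmw_loc_ext with (Taylor n (Derive f) a); [|apply IHn].
    intros x. symmetry. apply Derive_Taylor.
Qed.

Lemma Taylor_bound n f a x B T : 0 <= T -> Rabs (x - a) <= T ->
  (forall k, (k <= n)%nat -> Rabs (Derive_n f k a) <= B) ->
  Rabs (Taylor n f a x) <= INR (S n) * (B * (1 + T) ^ n).
Proof.
  intros HT Hx HB. unfold Taylor.
  assert (Hsum : forall (c : nat -> R) n M, (forall k, (k <= n)%nat -> Rabs (c k) <= M) ->
    Rabs (sum_f_R0 c n) <= INR (S n) * M).
  { clear. intros c n M H. induction n.
    - simpl. rewrite Rmult_1_l. apply H. lia.
    - simpl sum_f_R0. eapply Rle_trans; [apply Rabs_triang|]. rewrite S_INR.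
      specialize (IHn (fun k Hk => H k ltac:(lia))). specialize (H (S n) (le_n _)). lra. }
  apply Hsum. intros k Hk. pose proof (INR_fact_pos k). pose proof (INR_fact_ge_1 k).
  rewrite Rabs_mult, Rabs_div, <- RPow_abs, (Rabs_right (INR _)) by lra.
  assert (Rabs (Derive_n f k a) / INR (Factorial.fact k) <= B).
  { apply Rle_trans with (Rabs (Derive_n f k a)); [|auto].
    unfold Rdiv. rewrite <- (Rmult_1_r (Rabs (Derive_n f k a))) at 2.
    apply Rmult_le_compat_l; [apply Rabs_pos|]. rewrite <- Rinv_1. apply Rinv_le_contravar; lra. }
  assert (Rabs (x - a) ^ k <= (1 + T) ^ n).
  { apply Rle_trans with ((1 + T) ^ k); [apply pow_incr; split; [apply Rabs_pos | lra]|].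
    apply Rle_pow; [lra | auto]. }
  apply Rmult_le_compat; auto; [apply Rdiv_le_0_compat; [apply Rabs_pos | lra] | apply pow_le, Rabs_pos].
Qed.

Lemma Taylor_remainder_bound w f n a x H : weak_modulus w -> 0 <= H ->
  (forall k, (k < n)%nat -> forall y, ex_derive (Derive_n f k) y) -> a <= x ->
  (forall y z, a <= y <= x -> a <= z <= x ->
     Rabs (Derive_n f n y - Derive_n f n z) <= H * w (Rabs (y - z))) ->
  Rabs (f x - Taylor n f a x) <= H * w (x - a) * (x - a) ^ n.
Proof.
  intros Hw HH Hd Hax Hh. destruct Hw as [wp [wm _]].
  destruct (Req_dec a x) as [<-|E].
  { rewrite Taylor_at, !Rminus_diag, Rabs_R0.
    apply Rmult_le_pos; [apply Rmult_le_pos; auto; apply wp; lra | apply pow_le; lra]. }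
  destruct n as [|n].
  - unfold Taylor. simpl. replace (f x - f a / 1 * 1) with (f x - f a) by field.
    rewrite Rmult_1_r. specialize (Hh x a ltac:(lra) ltac:(lra)). simpl in Hh.
    rewrite (Rabs_right (x - a)) in Hh by lra. exact Hh.
  - destruct (Taylor_Lagrange f n a x) as [z [Hz Ez]]; [lra| |].
    { intros t Ht [|k] Hk; [exact I | apply Hd; lia]. }
    replace (sum_f_R0 (fun j : nat => (x - a) ^ j / INR (Factorial.fact j) * Derive_n f j a) n)
      with (Taylor n f a x) in Ez by (unfold Taylor; apply sum_eq; intros i _; unfold Rdiv; ring).
    rewrite Ez, Taylor_S.
    set (P := (x - a) ^ S n). set (Fc := INR (Factorial.fact (S n))).
    replace (Taylor n f a x + P / Fc * Derive_n f (S n) z - (Taylor n f a x + Derive_n f (S n) a / Fc * P))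
      with (P / Fc * (Derive_n f (S n) z - Derive_n f (S n) a)) by (unfold Rdiv; ring).
    pose proof (INR_fact_pos (S n)). pose proof (INR_fact_ge_1 (S n)).
    assert (HP : 0 <= P) by (apply pow_le; lra).
    assert (HPF : 0 <= P / Fc <= P).
    { split; [apply Rdiv_le_0_compat; unfold Fc; lra|]. unfold Rdiv.
      rewrite <- (Rmult_1_r P) at 2. apply Rmult_le_compat_l; auto.
      rewrite <- Rinv_1. apply Rinv_le_contravar; unfold Fc; lra. }
    specialize (Hh z a ltac:(lra) ltac:(lra)). rewrite (Rabs_right (z - a)) in Hh by lra.
    assert (w (z - a) <= w (x - a)) by (apply wm; lra).
    assert (Rabs (Derive_n f (S n) z - Derive_n f (S n) a) <= H * w (x - a)).
    { eapply Rle_trans; [apply Hh|]. apply Rmult_le_compat_l; auto. }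
    rewrite Rabs_mult, (Rabs_right (P / Fc)) by lra.
    apply Rle_trans with (P * (H * w (x - a))); [apply Rmult_le_compat; try lra; apply Rabs_pos|].
    fold P. lra.
Qed.

Lemma Taylor_remainder_loc w n phi lo hi : weak_modulus w -> Cmw_loc (S n) w phi ->
  exists M, 0 <= M /\ forall a x, lo <= a <= x -> x <= hi ->
  Rabs (phi x - Taylor (S n) phi a x) <= M * w (x - a) * (x - a) ^ (S n) /\
  Rabs (Derive phi x - Taylor n (Derive phi) a x) <= M * w (x - a) * (x - a) ^ n.
Proof.
  intros Hw Hphi. pose proof Hphi as [Hd Hh]. destruct (Hh lo hi) as [M [HM HM']].
  pose proof (proj1 (Cmw_loc_S w n phi) Hphi) as [_ [Hd' _]].
  exists M. split; auto. intros a x Ha Hx. split.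
  - apply Taylor_remainder_bound; [exact Hw | exact HM | intros k Hk; apply Hd; lia | lra |].
    intros y z Hy Hz. apply HM'; lra.
  - apply Taylor_remainder_bound; [exact Hw | exact HM | exact Hd' | lra |].
    intros y z Hy Hz. rewrite <- !Derive_n_S. apply HM'; lra.
Qed.

(** * Flatness of the corrected height on K *)

Definition contact_slope (f g : R -> R) (x : R) : R := 2 * (Derive f x * g x - f x * Derive g x).

Lemma Cmw_loc_contact_slope w n f g : weak_modulus w ->
  Cmw_loc (S n) w f -> Cmw_loc (S n) w g -> Cmw_loc n w (contact_slope f g).
Proof.
  intros Hw Hf Hg. pose proof (proj1 (Cmw_loc_S w n f) Hf) as [_ Hf'].
  pose proof (proj1 (Cmw_loc_S w n g) Hg) as [_ Hg'].
  apply Cmw_loc_scal, (Cmw_loc_minus w); apply (Cmw_loc_mult w Hw); auto; apply (Cmw_loc_weaken w Hw); auto.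
Qed.

Definition Taylor_wronskian (m : nat) (f g : R -> R) (a x : R) : R :=
  Derive (Taylor m f a) x * Taylor m g a x - Derive (Taylor m g a) x * Taylor m f a x.

Section Flatness.
Variables (n : nat) (w f g h : R -> R) (K : R -> Prop) (lo hi : R).
Hypothesis Hw : weak_modulus w.
Hypothesis Hf : Cmw_loc (S n) w f.
Hypothesis Hg : Cmw_loc (S n) w g.
Hypothesis Hh : Cmw_loc (S n) w h.
Hypothesis Hlh : lo <= hi.
Hypothesis HK : forall x, K x -> lo <= x <= hi.
Hypothesis HAV : AV_condition (S n) f g h K.

Let wronskian (x : R) : R := Derive f x * g x - f x * Derive g x.

Lemma loc_holder_wronskian : loc_holder w wronskian.
Proof.
  apply (Cmw_loc_loc_holder w Hw n). pose proof (Cmw_loc_contact_slope w n f g Hw Hf Hg) as H.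
  apply Cmw_loc_ext with (fun x => / 2 * contact_slope f g x); [|apply Cmw_loc_scal, H].
  intros x. unfold contact_slope, wronskian. field.
Qed.

Lemma loc_holder_Derive_Taylor phi a : loc_holder w (Derive (Taylor (S n) phi a)).
Proof.
  apply (Cmw_loc_loc_holder w Hw n). apply Cmw_loc_ext with (Taylor n (Derive phi) a).
  - intros x. symmetry. apply Derive_Taylor.
  - apply Cmw_loc_Taylor.
Qed.

Lemma loc_holder_Taylor_wronskian a : loc_holder w (Taylor_wronskian (S n) f g a).
Proof.
  pose proof (fun phi => Cmw_loc_loc_holder w Hw _ _ (Cmw_loc_Taylor w (S n) phi a)) as HT.
  apply (proj1 (Cmw_loc_0 w _)), (Cmw_loc_minus w); apply (proj2 (Cmw_loc_0 w _)), loc_holder_mult; auto;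
    apply loc_holder_Derive_Taylor.
Qed.

Lemma derivs_bound_on_interval : exists B, 0 <= B /\ forall k y, (k <= S n)%nat -> lo <= y <= hi ->
  Rabs (Derive_n f k y) <= B /\ Rabs (Derive_n g k y) <= B.
Proof.
  destruct (Cmw_loc_derivs_bounded w Hw _ f Hf lo hi) as [Bf [HBf Bf']].
  destruct (Cmw_loc_derivs_bounded w Hw _ g Hg lo hi) as [Bg [HBg Bg']].
  exists (Bf + Bg). split; [lra|]. intros k y Hk Hy.
  specialize (Bf' k Hk y Hy). specialize (Bg' k Hk y Hy). lra.
Qed.

Lemma Taylor_remainders : exists M, 0 <= M /\ forall a x, lo <= a <= x -> x <= hi ->
  Rabs (f x - Taylor (S n) f a x) <= M * w (x - a) * (x - a) ^ (S n) /\
  Rabs (g x - Taylor (S n) g a x) <= M * w (x - a) * (x - a) ^ (S n) /\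
  Rabs (Derive f x - Taylor n (Derive f) a x) <= M * w (x - a) * (x - a) ^ n /\
  Rabs (Derive g x - Taylor n (Derive g) a x) <= M * w (x - a) * (x - a) ^ n.
Proof.
  destruct (Taylor_remainder_loc w n f lo hi Hw Hf) as [Mf [HMf Rf]].
  destruct (Taylor_remainder_loc w n g lo hi Hw Hg) as [Mg [HMg Rg]].
  exists (Mf + Mg). split; [lra|]. intros a x Ha Hx.
  destruct (Rf a x Ha Hx) as [R1 R2]. destruct (Rg a x Ha Hx) as [R3 R4].
  assert (Hmono : forall M' j, M' <= Mf + Mg ->
    M' * w (x - a) * (x - a) ^ j <= (Mf + Mg) * w (x - a) * (x - a) ^ j).
  { intros M' j HM'. apply Rmult_le_compat_r; [apply pow_le; lra|].
    apply Rmult_le_compat_r; [apply Hw; lra | exact HM']. }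
  repeat split; (eapply Rle_trans; [eassumption | apply Hmono; lra]).
Qed.

Lemma Derive_Taylor_bound : exists Bp, 0 <= Bp /\ forall a x, lo <= a <= hi -> lo <= x <= hi ->
  Rabs (Taylor n (Derive f) a x) <= Bp /\ Rabs (Taylor n (Derive g) a x) <= Bp.
Proof.
  destruct derivs_bound_on_interval as [B [HB HBd]].
  exists (INR (S n) * (B * (1 + (hi - lo)) ^ n)).
  split; [apply Rmult_le_pos; [apply pos_INR | apply Rmult_le_pos; [lra | apply pow_le; lra]]|].
  intros a x Ha Hx. split; (apply Taylor_bound; [lra | apply Rabs_le; lra|]);
    intros k Hk; rewrite <- Derive_n_S; apply HBd; lia || lra.
Qed.

Lemma wronskian_Taylor_error : exists C, 0 <= C /\ forall a x b, lo <= a <= x -> x <= b <= hi ->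
  Rabs (wronskian x - Taylor_wronskian (S n) f g a x) <= C * w (b - a) * (b - a) ^ n.
Proof.
  set (T := hi - lo).
  destruct Taylor_remainders as [M [HM Rem]].
  destruct derivs_bound_on_interval as [B [HB HBd]].
  destruct Derive_Taylor_bound as [Bp [HBp HTp]].
  assert (HT : 0 <= T) by (unfold T; lra).
  exists (2 * (B + Bp * T) * M). split; [apply Rmult_le_pos; [nra | exact HM]|].
  intros a x b Hax Hxb. set (t := b - a).
  destruct (Rem a x Hax ltac:(lra)) as [R1 [R2 [R3 R4]]].
  destruct (HTp a x ltac:(lra) ltac:(lra)) as [P1 P2].
  destruct (HBd O x ltac:(lia) ltac:(lra)) as [F0 G0]. simpl in F0, G0.
  assert (HE : forall j, M * w (x - a) * (x - a) ^ j <= M * w t * t ^ j).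
  { intros j. rewrite !Rmult_assoc. apply Rmult_le_compat_l; auto.
    apply modulus_pow_mono; auto. unfold t; lra. }
  set (E := M * w t * t ^ n).
  assert (HEp : 0 <= E) by (apply Rmult_le_pos; [apply Rmult_le_pos; [|apply Hw] | apply pow_le]; unfold t; lra).
  assert (HtT : M * w t * t ^ S n <= T * E).
  { unfold E. replace (M * w t * t ^ S n) with (t * (M * w t * t ^ n)) by (simpl; ring).
    apply Rmult_le_compat_r; [fold E; lra | unfold t, T; lra]. }
  pose proof (HE n) as E1. pose proof (HE (S n)) as E2. fold E in E1.
  unfold wronskian, Taylor_wronskian. rewrite !Derive_Taylor.
  set (A1 := Derive f x - Taylor n (Derive f) a x) in *.
  set (A2 := Derive g x - Taylor n (Derive g) a x) in *.
  set (A3 := f x - Taylor (S n) f a x) in *. set (A4 := g x - Taylor (S n) g a x) in *.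
  replace (Derive f x * g x - f x * Derive g x
           - (Taylor n (Derive f) a x * Taylor (S n) g a x - Taylor n (Derive g) a x * Taylor (S n) f a x))
    with (A1 * g x + Taylor n (Derive f) a x * A4 - A2 * f x - Taylor n (Derive g) a x * A3)
    by (unfold A1, A2, A3, A4; ring).
  assert (Rabs (A1 * g x) <= E * B) by (rewrite Rabs_mult; apply Rmult_le_compat; try apply Rabs_pos; lra).
  assert (Rabs (A2 * f x) <= E * B) by (rewrite Rabs_mult; apply Rmult_le_compat; try apply Rabs_pos; lra).
  assert (Rabs (Taylor n (Derive f) a x * A4) <= Bp * (T * E))
    by (rewrite Rabs_mult; apply Rmult_le_compat; try apply Rabs_pos; lra).
  assert (Rabs (Taylor n (Derive g) a x * A3) <= Bp * (T * E))
    by (rewrite Rabs_mult; apply Rmult_le_compat; try apply Rabs_pos; lra).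
  eapply Rle_trans; [apply Rabs_sum4_le|]. fold t.
  replace (2 * (B + Bp * T) * M * w t * t ^ n) with (E * B + Bp * (T * E) + E * B + Bp * (T * E))
    by (unfold E; ring).
  lra.
Qed.

Lemma RInt_contact_slope a b : RInt (contact_slope f g) a b =
  2 * (RInt (fun x => wronskian x - Taylor_wronskian (S n) f g a x) a b
       + RInt (Taylor_wronskian (S n) f g a) a b).
Proof.
  pose proof (ex_RInt_loc_holder w Hw _ a b loc_holder_wronskian) as IW.
  pose proof (ex_RInt_loc_holder w Hw _ a b (loc_holder_Taylor_wronskian a)) as IQ.
  assert (E1 : RInt (contact_slope f g) a b = 2 * RInt wronskian a b)
    by exact (RInt_scal wronskian a b 2 IW).
  assert (E2 : RInt (fun x => wronskian x - Taylor_wronskian (S n) f g a x) a b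
               = RInt wronskian a b - RInt (Taylor_wronskian (S n) f g a) a b)
    by exact (RInt_minus wronskian _ a b IW IQ).
  rewrite E1, E2. lra.
Qed.

Lemma A_fun_approx : exists C, 0 <= C /\ forall a b, lo <= a <= b -> b <= hi ->
  Rabs ((h b - h a - RInt (contact_slope f g) a b) - A_fun (S n) f g h a b)
    <= C * w (b - a) * (b - a) ^ (S n).
Proof.
  destruct wronskian_Taylor_error as [C1 [HC1 HW]].
  destruct Taylor_remainders as [M [HM Rem]].
  destruct derivs_bound_on_interval as [B [HB HBd]].
  exists (2 * C1 + 4 * B * M). split; [nra|]. intros a b Hab Hb. set (t := b - a).
  assert (HI : Rabs (RInt (fun x => wronskian x - Taylor_wronskian (S n) f g a x) a b)
               <= C1 * w t * t ^ S n).
  { eapply Rle_trans; [apply abs_RInt_le_const; [lra | | intros x Hx; apply (HW a x b); lra]|].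
    - apply (ex_RInt_loc_holder w Hw). apply (proj1 (Cmw_loc_0 w _)), (Cmw_loc_minus w);
        apply (proj2 (Cmw_loc_0 w _)); [apply loc_holder_wronskian | apply loc_holder_Taylor_wronskian].
    - fold t. simpl. lra. }
  destruct (Rem a b Hab Hb) as [R1 [R2 _]]. fold t in R1, R2.
  destruct (HBd O a ltac:(lia) ltac:(lra)) as [F0 G0]. simpl in F0, G0.
  unfold A_fun. rewrite RInt_contact_slope.
  change (fun x => Derive (Taylor (S n) f a) x * Taylor (S n) g a x
                   - Derive (Taylor (S n) g a) x * Taylor (S n) f a x)
    with (Taylor_wronskian (S n) f g a).
  set (I := RInt (fun x => wronskian x - Taylor_wronskian (S n) f g a x) a b) in *.
  set (E := M * w t * t ^ S n) in *.
  replace (h b - h a - 2 * (I + RInt (Taylor_wronskian (S n) f g a) a b)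
           - (h b - h a - 2 * RInt (Taylor_wronskian (S n) f g a) a b
              + 2 * f a * (g b - Taylor (S n) g a b) - 2 * g a * (f b - Taylor (S n) f a b)))
    with (0 + 2 * g a * (f b - Taylor (S n) f a b) - 2 * I - 2 * f a * (g b - Taylor (S n) g a b))
    by ring.
  eapply Rle_trans; [apply Rabs_sum4_le|]. rewrite Rabs_R0, !Rabs_mult, Rabs_right by lra.
  assert (Rabs (g a) * Rabs (f b - Taylor (S n) f a b) <= B * E)
    by (apply Rmult_le_compat; auto; apply Rabs_pos).
  assert (Rabs (f a) * Rabs (g b - Taylor (S n) g a b) <= B * E)
    by (apply Rmult_le_compat; auto; apply Rabs_pos).
  replace ((2 * C1 + 4 * B * M) * w t * t ^ S n) with (2 * (C1 * w t * t ^ S n) + 4 * B * E)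
    by (unfold E; ring).
  nra.
Qed.

Lemma V_fun_bound : exists C, 0 <= C /\ forall a b, lo <= a < b -> b <= hi ->
  0 < V_fun (S n) f g a b <= C * (b - a) ^ S (S n).
Proof.
  destruct Derive_Taylor_bound as [Bp [HBp HTp]].
  assert (HT : 0 <= (hi - lo) ^ n) by (apply pow_le; lra).
  exists ((hi - lo) ^ n + 2 * Bp). split; [lra|]. intros a b Hab Hb. set (t := b - a).
  assert (Ht : 0 < t) by (unfold t; lra).
  assert (Htn : 0 <= t ^ n) by (apply pow_le; lra).
  set (J := fun x => Rabs (Derive (Taylor (S n) f a) x) + Rabs (Derive (Taylor (S n) g a) x)).
  assert (IJ : ex_RInt J a b).
  { apply (ex_RInt_loc_holder w Hw), (proj1 (Cmw_loc_0 w _)), (Cmw_loc_plus w);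
      apply (proj2 (Cmw_loc_0 w _)), loc_holder_abs, loc_holder_Derive_Taylor. }
  assert (HJ0 : 0 <= RInt J a b)
    by (apply RInt_ge_0; [lra | exact IJ | intros; apply Rplus_le_le_0_compat; apply Rabs_pos]).
  assert (HJ : RInt J a b <= t * (2 * Bp)).
  { eapply Rle_trans; [apply Rle_abs | apply abs_RInt_le_const; [lra | exact IJ |]].
    intros x Hx. unfold J. rewrite !Derive_Taylor, Rabs_right
      by (apply Rle_ge, Rplus_le_le_0_compat; apply Rabs_pos).
    destruct (HTp a x ltac:(lra) ltac:(lra)). lra. }
  unfold V_fun. fold J t. replace (2 * S n)%nat with (S (S n) + n)%nat by lia.
  rewrite pow_add. assert (0 < t ^ S (S n)) by (apply pow_lt; lra).
  assert (0 < t ^ S n) by (apply pow_lt; lra).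
  assert (t ^ n <= (hi - lo) ^ n) by (apply pow_incr; unfold t; lra).
  assert (0 < t ^ n) by (apply pow_lt; lra).
  split; [apply Rplus_lt_le_0_compat; [apply Rmult_lt_0_compat | apply Rmult_le_pos]; lra|].
  replace (t ^ S n * RInt J a b) with (RInt J a b * t ^ S n) by ring.
  assert (RInt J a b * t ^ S n <= 2 * Bp * t ^ S (S n)).
  { replace (2 * Bp * t ^ S (S n)) with (t * (2 * Bp) * t ^ S n) by (simpl; ring).
    apply Rmult_le_compat_r; lra. }
  nra.
Qed.

Lemma increment_bound : exists C, 0 <= C /\ forall a b, lo <= a <= b -> b <= hi ->
  Rabs (h b - h a - RInt (contact_slope f g) a b) <= C.
Proof.
  pose proof (Cmw_loc_loc_holder w Hw _ _ (Cmw_loc_contact_slope w n f g Hw Hf Hg)) as HS.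
  destruct (loc_holder_bounded w Hw _ HS lo hi) as [BS [HBS HBS']].
  destruct (loc_holder_bounded w Hw _ (Cmw_loc_loc_holder w Hw _ _ Hh) lo hi) as [Bh [HBh HBh']].
  exists (2 * Bh + (hi - lo) * BS). split; [nra|]. intros a b Hab Hb.
  assert (Rabs (RInt (contact_slope f g) a b) <= (b - a) * BS).
  { apply abs_RInt_le_const; [lra | apply (ex_RInt_loc_holder w Hw); auto | intros; apply HBS'; lra]. }
  assert ((b - a) * BS <= (hi - lo) * BS) by (apply Rmult_le_compat_r; lra).
  pose proof (HBh' a ltac:(lra)). pose proof (HBh' b ltac:(lra)).
  replace (h b - h a - RInt (contact_slope f g) a b) with (h b + 0 - h a - RInt (contact_slope f g) a b) by ring.
  eapply Rle_trans; [apply Rabs_sum4_le|]. rewrite Rabs_R0. lra.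
Qed.

Lemma interval_modulus_bound : exists Cw, 0 <= Cw /\ forall a b, K a -> K b -> a <= b ->
  (b - a) ^ S (S n) <= Cw * (w (b - a) * (b - a) ^ S n).
Proof.
  destruct (pow_succ_le_modulus w (Rmax (hi - lo) 1) Hw) as [Cw [HCw Hlin]].
  { apply Rlt_le_trans with 1; [lra | apply Rmax_r]. }
  exists Cw. split; auto. intros a b Ka Kb Hab. destruct (HK a Ka), (HK b Kb).
  rewrite <- Rmult_assoc. apply Hlin. split; [lra|].
  apply Rle_trans with (hi - lo); [lra | apply Rmax_l].
Qed.

Lemma flatness_near : exists d C, 0 < d /\ 0 <= C /\ forall a b, K a -> K b -> 0 < b - a < d ->
  Rabs (h b - h a - RInt (contact_slope f g) a b) <= C * (w (b - a) * (b - a) ^ (S n)).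
Proof.
  destruct A_fun_approx as [C1 [HC1 HA]].
  destruct V_fun_bound as [C2 [HC2 HV]].
  destruct interval_modulus_bound as [Cw [HCw Hlin]].
  destruct (HAV 1 ltac:(lra)) as [d [Hd HAVd]].
  exists d, (C1 + C2 * Cw). split; [auto | split; [nra|]].
  intros a b Ka Kb Hab. destruct (HK a Ka), (HK b Kb).
  destruct (HV a b ltac:(lra) ltac:(lra)) as [HV0 HV1].
  pose proof (Rabs_le_of_ratio _ _ HV0 (HAVd a b Ka Kb Hab)) as HAV1.
  pose proof (HA a b ltac:(lra) ltac:(lra)) as HA1. rewrite Rmult_assoc in HA1.
  assert (C2 * (b - a) ^ S (S n) <= C2 * Cw * (w (b - a) * (b - a) ^ S n))
    by (rewrite Rmult_assoc; apply Rmult_le_compat_l, Hlin; auto; lra).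
  replace (h b - h a - RInt (contact_slope f g) a b)
    with ((h b - h a - RInt (contact_slope f g) a b - A_fun (S n) f g h a b) + A_fun (S n) f g h a b)
    by ring.
  eapply Rle_trans; [apply Rabs_triang|]. lra.
Qed.

Lemma flatness_far d : 0 < d -> exists C, 0 <= C /\ forall a b, K a -> K b -> d <= b - a ->
  Rabs (h b - h a - RInt (contact_slope f g) a b) <= C * (w (b - a) * (b - a) ^ (S n)).
Proof.
  intros Hd. destruct increment_bound as [C3 [HC3 HI]].
  destruct interval_modulus_bound as [Cw [HCw Hlin]].
  assert (Hdp : 0 < d ^ S (S n)) by (apply pow_lt; lra).
  exists (C3 / d ^ S (S n) * Cw). split; [apply Rmult_le_pos; [apply Rdiv_le_0_compat|]; lra|].
  intros a b Ka Kb Hab. destruct (HK a Ka), (HK b Kb).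
  eapply Rle_trans; [apply HI; lra|].
  assert (d ^ S (S n) <= (b - a) ^ S (S n)) by (apply pow_incr; lra).
  specialize (Hlin a b Ka Kb ltac:(lra)).
  apply Rmult_le_reg_r with (d ^ S (S n)); auto.
  replace (C3 / d ^ S (S n) * Cw * (w (b - a) * (b - a) ^ S n) * d ^ S (S n))
    with (C3 * (Cw * (w (b - a) * (b - a) ^ S n))) by (field; lra).
  apply Rmult_le_compat_l; lra.
Qed.

Lemma AV_flatness : exists C, 0 <= C /\ forall a b, K a -> K b -> a < b ->
  Rabs (h b - h a - RInt (contact_slope f g) a b) <= C * w (b - a) * (b - a) ^ (S n).
Proof.
  destruct flatness_near as [d [C1 [Hd [HC1 Hnear]]]].
  destruct (flatness_far d Hd) as [C2 [HC2 Hfar]].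
  exists (C1 + C2). split; [lra|]. intros a b Ka Kb Hab.
  assert (0 <= w (b - a) * (b - a) ^ S n) by (apply Rmult_le_pos; [apply Hw | apply pow_le]; lra).
  rewrite Rmult_assoc, Rmult_plus_distr_r.
  destruct (Rlt_dec (b - a) d).
  - pose proof (Hnear a b Ka Kb ltac:(lra)). nra.
  - pose proof (Hfar a b Ka Kb ltac:(lra)). nra.
Qed.

End Flatness.

(** * Global Hölder bounds and the extension *)

Lemma Cmw_holder_bound m w phi : modulus_of_continuity w -> Cmw m w phi ->
  exists M, 0 <= M /\ forall x y,
    Rabs (Derive_n phi m x - Derive_n phi m y) <= M * w (Rabs (x - y)).
Proof.
  intros Hw [_ [M HM]].
  assert (HM0 : 0 <= M).
  { specialize (HM 0 1 ltac:(lra)). eapply Rle_trans; [|apply HM].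
    apply Rdiv_le_0_compat; [apply Rabs_pos | apply modulus_pos; auto].
    rewrite Rminus_0_r, Rabs_R1. lra. }
  exists M. split; auto. intros x y. destruct (Req_dec x y) as [<-|Hxy].
  - destruct Hw as [w0 _]. rewrite !Rminus_diag, Rabs_R0, w0. lra.
  - specialize (HM y x (not_eq_sym Hxy)).
    assert (Hp : 0 < w (Rabs (x - y))) by (apply modulus_pos, Rabs_pos_lt; auto; lra).
    apply Rmult_le_compat_r with (r := w (Rabs (x - y))) in HM; [|lra].
    unfold Rdiv in HM. rewrite Rmult_assoc, Rinv_l, Rmult_1_r in HM by lra. exact HM.
Qed.

Lemma Cmw_loc_of_Cmw m w phi : modulus_of_continuity w -> Cmw m w phi -> Cmw_loc m w phi.
Proof.
  intros Hw Hphi. destruct (Cmw_holder_bound m w phi Hw Hphi) as [M [HM H]].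
  split; [apply Hphi|]. intros p q. exists M. split; auto.
Qed.

Lemma Cmw_of_Cmw_loc m w phi M : modulus_of_continuity w -> Cmw_loc m w phi ->
  (forall x y, Rabs (Derive_n phi m x - Derive_n phi m y) <= M * w (Rabs (x - y))) ->
  Cmw m w phi.
Proof.
  intros Hw Hphi HM. split; [split|].
  - apply Hphi.
  - apply (Cmw_loc_continuous w (modulus_weak w Hw) m phi Hphi). lia.
  - exists M. intros a b Hab.
    assert (Hp : 0 < w (Rabs (b - a))) by (apply modulus_pos, Rabs_pos_lt; auto; lra).
    apply Rmult_le_reg_r with (w (Rabs (b - a))); auto.
    unfold Rdiv. rewrite Rmult_assoc, Rinv_l, Rmult_1_r by lra. apply HM.
Qed.

Lemma compact_support_holder w n phi p q : weak_modulus w -> Cmw_loc n w phi -> p <= q ->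
  (forall y, y < p -> phi y = 0) -> (forall y, q < y -> phi y = 0) ->
  exists M, 0 <= M /\ forall x y,
    Rabs (Derive_n phi n x - Derive_n phi n y) <= M * w (Rabs (x - y)).
Proof.
  intros Hw Hphi Hpq H1 H2.
  assert (Z : forall y, y <= p \/ q <= y -> Derive_n phi n y = 0).
  { intros y [Hy|Hy].
    - destruct (Req_dec y p) as [->|].
      + apply (Derive_n_vanish_left w n phi p Hw Hphi H1). lia.
      + apply Derive_n_locally_zero, locally_Rabs. exists (p - y). split; [lra|].
        intros z Hz. apply Rabs_lt_between in Hz. apply H1. lra.
    - destruct (Req_dec y q) as [->|].
      + apply (Derive_n_vanish_right w n phi q Hw Hphi H2). lia.
      + apply Derive_n_locally_zero, locally_Rabs. exists (y - q). split; [lra|].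
        intros z Hz. apply Rabs_lt_between in Hz. apply H2. lra. }
  (* phi^(n) vanishes off [p, q], so it factors through the 1-Lipschitz clamp onto [p, q]. *)
  set (c := fun y => Rmax p (Rmin y q)).
  assert (Ec : forall y, Derive_n phi n y = Derive_n phi n (c y)).
  { intros y. unfold c. destruct (Rle_dec y p); [|destruct (Rle_dec q y)].
    - rewrite Rmin_left, Rmax_left, !Z by lra. reflexivity.
    - rewrite Rmin_right, Rmax_right, !Z by lra. reflexivity.
    - rewrite Rmin_left, Rmax_right by lra. reflexivity. }
  assert (Hc : forall y, p <= c y <= q)
    by (intros; unfold c; split; [apply Rmax_l | apply Rmax_lub; [lra | apply Rmin_r]]).
  assert (Hcl : forall x y, Rabs (c x - c y) <= Rabs (x - y)).
  { intros x y. pose proof (Rle_abs (x - y)). pose proof (Rle_abs (y - x)).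
    rewrite (Rabs_minus_sym y x) in *. unfold c, Rmax, Rmin.
    repeat match goal with
           | |- context [Rle_dec ?a ?b] => destruct (Rle_dec a b)
           | _ : context [Rle_dec ?a ?b] |- _ => destruct (Rle_dec a b)
           end; apply Rabs_le; split; lra. }
  destruct (proj2 Hphi p q) as [M [HM HM']]. exists M. split; auto.
  intros x y. rewrite (Ec x), (Ec y). eapply Rle_trans; [apply HM'; auto|].
  apply Rmult_le_compat_l; auto. apply Hw. split; [apply Rabs_pos | auto].
Qed.

Lemma Cmw_plus_compact_support m w h v p q : modulus_of_continuity w -> p <= q ->
  Cmw m w h -> Cmw_loc m w v ->
  (forall y, y < p -> v y = 0) -> (forall y, q < y -> v y = 0) ->
  Cmw m w (fun x => h x + v x).
Proof.
  intros Hw Hpq Ch Lv Hv1 Hv2. pose proof (modulus_weak w Hw) as Hww.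
  destruct (Cmw_holder_bound m w h Hw Ch) as [Mh [HMh Hh]].
  destruct (compact_support_holder w m v p q Hww Lv Hpq Hv1 Hv2) as [Mv [HMv Hv]].
  assert (Lh : Cmw_loc m w h) by (apply Cmw_loc_of_Cmw; auto).
  apply (Cmw_of_Cmw_loc m w _ (Mh + Mv) Hw (Cmw_loc_plus w m h v Lh Lv)).
  intros x y.
  assert (Hd : forall z, Derive_n (fun x => h x + v x) m z = Derive_n h m z + Derive_n v m z).
  { intros z. apply Derive_n_plus; apply filter_forall; intros t k Hk;
      apply (Cmw_loc_ex_derive_n w m); auto. }
  rewrite !Hd. replace (Derive_n h m x + Derive_n v m x - (Derive_n h m y + Derive_n v m y))
    with ((Derive_n h m x - Derive_n h m y) + (Derive_n v m x - Derive_n v m y)) by ring.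
  eapply Rle_trans; [apply Rabs_triang|]. pose proof (Hh x y). pose proof (Hv x y). lra.
Qed.

Lemma compact_extremes K k0 : compact K -> K k0 ->
  exists lo hi, K lo /\ K hi /\ forall x, K x -> lo <= x <= hi.
Proof.
  intros Hc Hk0. destruct (compact_P1 K Hc) as [mb [Mb HB]].
  pose proof (compact_P2 K Hc) as HKc. pose proof (HB k0 Hk0).
  destruct (last_below_spec K k0 HKc Hk0 Mb ltac:(lra)) as [A1 [_ A3]].
  destruct (first_above_spec K k0 HKc Hk0 mb ltac:(lra)) as [B1 [_ B3]].
  exists (first_above K mb), (last_below K Mb). split; [|split]; auto.
  intros x Kx. destruct (HB x Kx). split; [apply B3 | apply A3]; auto.
Qed.

Lemma cutoff_exists w m p q : weak_modulus w -> exists chi, Cmw_loc m w chi /\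
  (forall y, p - 1 <= y <= q + 1 -> chi y = 1) /\
  (forall y, y < p - 2 \/ q + 2 < y -> chi y = 0).
Proof.
  intros Hw. exists (fun x => smooth_step m (x - (p - 2)) * smooth_step m ((q + 2) - x)).
  split; [|split].
  - apply Cmw_loc_of_lipschitz; auto.
    apply Cmw_loc_ext with
      (fun x => smooth_step m (1 * x + - (p - 2)) * smooth_step m ((-1) * x + (q + 2))).
    { intros x. f_equal; f_equal; ring. }
    apply Cmw_loc_mult; [apply weak_modulus_id | |]; apply Cmw_loc_affine, Cmw_loc_smooth_step.
  - intros y Hy. rewrite !smooth_step_1 by lra. ring.
  - intros y [Hy|Hy]; [rewrite (smooth_step_0 _ (y - (p - 2))) | rewrite (smooth_step_0 _ (q + 2 - y))];
      lra || ring.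
Qed.

Section Extension.
Variables (n : nat) (w f g h : R -> R) (K : R -> Prop) (lo hi : R).
Hypothesis Hw : modulus_of_continuity w.
Hypothesis Hf : Cmw_loc (S n) w f.
Hypothesis Hg : Cmw_loc (S n) w g.
Hypothesis Hh : Cmw_loc (S n) w h.
Hypothesis HKc : closed_set K.
Hypothesis Hlo : K lo.
Hypothesis Hhi : K hi.
Hypothesis Hb : forall x, K x -> lo <= x <= hi.
Hypothesis HAV : AV_condition (S n) f g h K.

Let Hww : weak_modulus w := modulus_weak w Hw.

Lemma height_defect : exists u, Cmw_loc (S n) w u /\
  (forall x, Derive u x = Derive h x - contact_slope f g x) /\
  exists Cu, 0 <= Cu /\ forall a b, K a -> K b ->
    Rabs (u b - u a) <= Cu * w (Rabs (b - a)) * Rabs (b - a) ^ S n.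
Proof.
  pose proof (Cmw_loc_contact_slope w n f g Hww Hf Hg) as LF.
  pose proof (Cmw_loc_loc_holder w Hww n _ LF) as HF.
  set (P := fun x => RInt (contact_slope f g) lo x).
  assert (HP : forall x, is_derive P x (contact_slope f g x)).
  { intros x. apply (is_derive_RInt _ P lo x).
    - apply filter_forall. intros y. apply RInt_correct, (ex_RInt_loc_holder w Hww _ _ _ HF).
    - apply (loc_holder_continuous w Hww _ HF). }
  assert (LP : Cmw_loc (S n) w P).
  { apply Cmw_loc_S. split; [intros x; eexists; apply HP|].
    apply Cmw_loc_ext with (contact_slope f g); auto.
    intros x; symmetry; apply is_derive_unique, HP. }
  exists (fun x => h x - P x). split; [apply Cmw_loc_minus; auto|]. split.
  - intros x. rewrite Derive_minus, (is_derive_unique P x _ (HP x)); auto.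
    + apply (Cmw_loc_ex_derive w n h Hh).
    + eexists; apply HP.
  - assert (Hlh : lo <= hi) by (apply Hb; auto).
    destruct (AV_flatness n w f g h K lo hi Hww Hf Hg Hh Hlh Hb HAV) as [Cu [HCu Hflat]].
    assert (Eu : forall a b, h b - P b - (h a - P a) = h b - h a - RInt (contact_slope f g) a b).
    { intros a b. unfold P. rewrite <- (RInt_Chasles _ lo a b); try apply (ex_RInt_loc_holder w Hww); auto.
      unfold plus; simpl. ring. }
    exists Cu. split; auto. intros a b Ka Kb.
    destruct (Rtotal_order a b) as [Hab|[Hab|Hab]].
    + rewrite Eu, (Rabs_right (b - a)) by lra. apply Hflat; auto.
    + subst b. rewrite !Rminus_diag, Rabs_R0. rewrite (proj1 Hw). simpl. lra.
    + rewrite <- Rabs_Ropp, Ropp_minus_distr, Eu, (Rabs_left1 (b - a)), Ropp_minus_distr by lra.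
      apply Hflat; auto.
Qed.

Lemma flat_correction u Cu : Cmw_loc (S n) w u -> 0 <= Cu ->
  (forall a b, K a -> K b -> Rabs (u b - u a) <= Cu * w (Rabs (b - a)) * Rabs (b - a) ^ S n) ->
  exists v, Cmw_loc (S n) w v /\ (forall y, y < lo - 2 -> v y = 0) /\ (forall y, hi + 2 < y -> v y = 0) /\
    forall x, K x -> v x = 0 /\ Derive v x = - Derive u x.
Proof.
  intros Lu HCu Hu.
  destruct (flat_extension K lo hi HKc Hlo Hhi Hb w Hww (modulus_ratio w Hw) (S n) ltac:(lia) u Cu HCu Hu)
    as [psi [Lpsi [Hpsi1 Hpsi2]]].
  destruct (cutoff_exists w (S n) lo hi Hww) as [chi [Lchi [chi1 chi0]]].
  exists (fun x => chi x * (psi x - u x)). split; [|split; [|split]].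
  - apply (Cmw_loc_mult w Hww); auto. apply Cmw_loc_minus; auto.
  - intros y Hy. rewrite chi0 by lra. ring.
  - intros y Hy. rewrite chi0 by lra. ring.
  - intros x Kx. destruct (Hb x Kx). rewrite Hpsi1 by auto. split; [ring|].
    rewrite (Derive_ext_loc _ (fun y => psi y - u y)).
    + rewrite Derive_minus, Hpsi2 by (auto || apply (Cmw_loc_ex_derive w n); auto). ring.
    + apply locally_Rabs. exists 1. split; [lra|]. intros y Hy. apply Rabs_lt_between in Hy.
      rewrite chi1 by lra. ring.
Qed.

End Extension.

Theorem lemma3p6 (m : nat) (w f g h : R -> R) (K : R -> Prop) :
  (1 <= m)%nat ->
  modulus_of_continuity w ->
  Cmw m w f -> Cmw m w g -> Cmw m w h ->
  compact K ->
  AV_condition m f g h K ->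
  exists hh : R -> R,
    Cmw m w hh /\
    (forall x, K x -> hh x = h x) /\
    (forall x, K x -> Derive hh x = 2 * (Derive f x * g x - f x * Derive g x)).
Proof.
  intros Hm Hw Cf Cg Ch HKc HAV.
  destruct (classic (exists k, K k)) as [[k0 Hk0]|HKe].
  2:{ exists h. split; [|split]; auto; intros x Kx; exfalso; eauto. }
  destruct (compact_extremes K k0 HKc Hk0) as [lo [hi [Klo [Khi Hb]]]].
  assert (Hlh : lo <= hi) by (apply Hb; auto).
  destruct m as [|n]; [lia|].
  pose proof (Cmw_loc_of_Cmw _ w f Hw Cf) as Lf.
  pose proof (Cmw_loc_of_Cmw _ w g Hw Cg) as Lg.
  pose proof (Cmw_loc_of_Cmw _ w h Hw Ch) as Lh.
  pose proof (compact_P2 K HKc) as HKcl.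
  destruct (height_defect n w f g h K lo hi Hw Lf Lg Lh Klo Hb HAV) as [u [Lu [Du [Cu [HCu Fu]]]]].
  destruct (flat_correction n w K lo hi Hw HKcl Klo Khi Hb u Cu Lu HCu Fu) as [v [Lv [Hv1 [Hv2 Hv]]]].
  exists (fun x => h x + v x). split; [|split].
  - apply (Cmw_plus_compact_support _ _ _ _ (lo - 2) (hi + 2)); auto. lra.
  - intros x Kx. rewrite (proj1 (Hv x Kx)). ring.
  - intros x Kx. rewrite Derive_plus, (proj2 (Hv x Kx)), Du.
    + unfold contact_slope. ring.
    + apply (Cmw_loc_ex_derive w n); auto.
    + apply (Cmw_loc_ex_derive w n); auto.
Qed.
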